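(* Suppose that, after a permutation of its columns, $A=[A^{(1)},\dots,A^{(k)}]$ where $\mathrm{New}(A^{(1)}),\dots,\mathrm{New}(A^{(k)})$ are mutually disjoint faces of $\mathrm{New}(A)$, such that (1) whenever the extreme points of $\mathrm{New}(A^{(i)})$ are affinely independent, at most two columns of $A^{(i)}$ are non-extreme points of $\mathrm{New}(A^{(i)})$, and (2) for every other $i$, at most one column of $A^{(i)}$ is a non-extreme point of $\mathrm{New}(A^{(i)})$. Then $C_{\mathrm{SAGE}}(A)=C_{\mathrm{NNS}}(A)$.
   Context: Let $A\in\mathbb{R}^{n\times m}$ have distinct columns $a_1,\dots,a_m$. For $c\in\mathbb{R}^m$, $\mathrm{Sig}(A,c)$ denotes the function $x\mapsto\sum_{i=1}^m c_i\exp(a_i^\top x)$ on $\mathbb{R}^n$. $\mathrm{New}(A)=\mathrm{conv}\{a_1,\dots,a_m\}$ is the Newton polytope. $C_{\mathrm{NNS}}(A)=\{c\in\mathbb{R}^m:\mathrm{Sig}(A,c)(x)\ge 0\ \forall x\in\mathbb{R}^n\}$. For $k\in[m]$, the $k$-th AGE cone is $C_{\mathrm{AGE}}(A,k)=\{c\in C_{\mathrm{NNS}}(A): c_i\ge 0\ \forall i\ne k\}$, and the SAGE cone is the Minkowski sum $C_{\mathrm{SAGE}}(A)=\sum_{k=1}^m C_{\mathrm{AGE}}(A,k)$. *)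

From Stdlib Require Import Reals.
Open Scope R_scope.

(* Points of R^n are functions nat -> R; only coordinates j < n matter.
   A matrix A in R^{n x m} is given by its columns a : nat -> (nat -> R),
   column i (i < m) being a i, with coordinates a i j (j < n). *)

Fixpoint fsum (k : nat) (f : nat -> R) : R :=
  match k with
  | O => 0
  | S k' => fsum k' f + f k'
  end.

Definition dot (n : nat) (u v : nat -> R) : R := fsum n (fun j => u j * v j).

Definition Sig (n m : nat) (a : nat -> nat -> R) (c : nat -> R) (x : nat -> R) : R :=
  fsum m (fun i => c i * exp (dot n (a i) x)).

Definition C_NNS (n m : nat) (a : nat -> nat -> R) (c : nat -> R) : Prop :=
  forall x : nat -> R, 0 <= Sig n m a c x.

Definition C_AGE (n m : nat) (a : nat -> nat -> R) (k : nat) (c : nat -> R) : Prop :=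
  C_NNS n m a c /\ (forall i, (i < m)%nat -> i <> k -> 0 <= c i).

Definition C_SAGE (n m : nat) (a : nat -> nat -> R) (c : nat -> R) : Prop :=
  exists cs : nat -> nat -> R,
    (forall k, (k < m)%nat -> C_AGE n m a k (cs k)) /\
    (forall i, (i < m)%nat -> c i = fsum m (fun k => cs k i)).

Definition eqv (n : nat) (x y : nat -> R) : Prop := forall j, (j < n)%nat -> x j = y j.

Definition conv_cols (n m : nat) (a : nat -> nat -> R) (S : nat -> Prop) (p : nat -> R) : Prop :=
  exists lam : nat -> R,
    (forall i, (i < m)%nat -> 0 <= lam i) /\
    (forall i, (i < m)%nat -> ~ S i -> lam i = 0) /\
    fsum m lam = 1 /\
    (forall j, (j < n)%nat -> p j = fsum m (fun i => lam i * a i j)).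

Definition in_open_seg (n : nat) (x y p : nat -> R) : Prop :=
  exists t, 0 < t < 1 /\ forall j, (j < n)%nat -> p j = t * x j + (1 - t) * y j.

Definition convex_set (n : nat) (C : (nat -> R) -> Prop) : Prop :=
  forall x y t, C x -> C y -> 0 <= t <= 1 ->
    forall p, (forall j, (j < n)%nat -> p j = t * x j + (1 - t) * y j) -> C p.

Definition is_face (n : nat) (F C : (nat -> R) -> Prop) : Prop :=
  (forall p, F p -> C p) /\ convex_set n F /\
  (forall x y p, C x -> C y -> in_open_seg n x y p -> F p -> F x /\ F y).

Definition is_extreme (n : nat) (C : (nat -> R) -> Prop) (p : nat -> R) : Prop :=
  C p /\ forall x y, C x -> C y -> in_open_seg n x y p -> eqv n x y.

Definition aff_indep_cols (n m : nat) (a : nat -> nat -> R) (E : nat -> Prop) : Prop :=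
  forall mu : nat -> R,
    (forall i, (i < m)%nat -> ~ E i -> mu i = 0) ->
    fsum m mu = 0 ->
    (forall j, (j < n)%nat -> fsum m (fun i => mu i * a i j) = 0) ->
    forall i, (i < m)%nat -> E i -> mu i = 0.

(* Block structure: blk i = l means column i belongs to A^(l) (l < K). *)
Definition New_blk (n m : nat) (a : nat -> nat -> R) (blk : nat -> nat) (l : nat) :=
  conv_cols n m a (fun i => blk i = l).

Definition New (n m : nat) (a : nat -> nat -> R) := conv_cols n m a (fun _ => True).

Definition extreme_col (n m : nat) (a : nat -> nat -> R) (blk : nat -> nat) (l i : nat) : Prop :=
  blk i = l /\ is_extreme n (New_blk n m a blk l) (a i).

Definition nonextreme_col (n m : nat) (a : nat -> nat -> R) (blk : nat -> nat) (l i : nat) : Prop :=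
  (i < m)%nat /\ blk i = l /\ ~ is_extreme n (New_blk n m a blk l) (a i).

From Stdlib Require Import Reals Lra Lia Psatz List ClassicalEpsilon Classical.
Open Scope R_scope.
Import ListNotations.

(* Each block [New(A^(l))] is an exposed face of [New(A)]: by Farkas' lemma, proved by
   Fourier–Motzkin elimination, some direction [v] makes the columns of the block maximal
   for [a_i . v], ahead of all other columns by a margin.  Pushing [x] far along [v] shows
   that the restriction of a nonnegative signomial to one block is again nonnegative, and in
   the same way every extreme column of a block carries a nonnegative coefficient.  So the
   negative coefficients of a block sit on its non-extreme columns; if there is at most one,
   the block is an AGE vector.  Otherwise the hypotheses leave exactly two, [p] and [q], and
   make the extreme columns [E] affinely independent; [a_p] and [a_q] are barycentres of
   columns in [E] with weights [lam] and [mu].  Affine independence lets [exp (a_i . x)] take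
   arbitrary values [y_i] on [E], so nonnegativity becomes
     [- c_p G_lam(y) - c_q G_mu(y) <= sum_(i in E) c_i y_i]
   for the weighted geometric means [G].  An intermediate value argument yields [y], [s], [r]
   with [c_i y_i >= lam_i s + mu_i r] on [E], [- c_p G_lam(y) <= s] and [- c_q G_mu(y) <= r],
   and by AM–GM the coefficients then split into an AGE vector at [p] and one at [q]. *)

Definition pdec (P : Prop) : {P} + {~ P} := excluded_middle_informative P.

Definition ind (P : Prop) : R := if pdec P then 1 else 0.

Lemma ind_T (P : Prop) : P -> ind P = 1.
Proof. unfold ind; destruct pdec; tauto. Qed.

Lemma ind_F (P : Prop) : ~ P -> ind P = 0.
Proof. unfold ind; destruct pdec; tauto. Qed.

Lemma ind_ge0 (P : Prop) : 0 <= ind P.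
Proof. unfold ind; destruct pdec; lra. Qed.

Definition delta (i : nat) : nat -> R := fun k => if Nat.eq_dec k i then 1 else 0.

Section FiniteSums.

Implicit Types (k : nat) (f g : nat -> R).

Lemma fsum_ext k f g : (forall i, (i < k)%nat -> f i = g i) -> fsum k f = fsum k g.
Proof.
  induction k; simpl; intros H; auto.
  rewrite IHk by (intros; apply H; lia). rewrite H by lia. auto.
Qed.

Lemma fsum_plus k f g : fsum k (fun i => f i + g i) = fsum k f + fsum k g.
Proof. induction k; simpl; [lra|]. rewrite IHk; lra. Qed.

Lemma fsum_minus k f g : fsum k (fun i => f i - g i) = fsum k f - fsum k g.
Proof. induction k; simpl; [lra|]. rewrite IHk; lra. Qed.

Lemma fsum_scal k c f : fsum k (fun i => c * f i) = c * fsum k f.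
Proof. induction k; simpl; [lra|]. rewrite IHk; lra. Qed.

Lemma fsum_scalr k c f : fsum k (fun i => f i * c) = fsum k f * c.
Proof. induction k; simpl; [lra|]. rewrite IHk; lra. Qed.

Lemma fsum_zero k f : (forall i, (i < k)%nat -> f i = 0) -> fsum k f = 0.
Proof.
  intros H. rewrite (fsum_ext k f (fun _ => 0)) by auto. clear H.
  induction k; simpl; lra.
Qed.

Lemma fsum_le k f g : (forall i, (i < k)%nat -> f i <= g i) -> fsum k f <= fsum k g.
Proof.
  induction k; simpl; intros H; [lra|].
  assert (f k <= g k) by (apply H; lia).
  assert (fsum k f <= fsum k g) by (apply IHk; intros; apply H; lia). lra.
Qed.

Lemma fsum_nonneg k f : (forall i, (i < k)%nat -> 0 <= f i) -> 0 <= fsum k f.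
Proof.
  intros H. rewrite <- (fsum_zero k (fun _ => 0)) by auto. apply fsum_le; auto.
Qed.

Lemma fsum_single k f i0 : (i0 < k)%nat -> (forall i, (i < k)%nat -> i <> i0 -> f i = 0) ->
  fsum k f = f i0.
Proof.
  induction k; simpl; intros H1 H2; [lia|].
  destruct (Nat.eq_dec i0 k).
  - subst. rewrite fsum_zero; [lra|]. intros; apply H2; lia.
  - rewrite IHk by (try lia; intros; apply H2; lia). rewrite (H2 k) by lia. lra.
Qed.

Lemma fsum_delta k i f : (i < k)%nat -> fsum k (fun j => delta i j * f j) = f i.
Proof.
  intros H. rewrite (fsum_single k _ i H); unfold delta.
  - destruct Nat.eq_dec; [ring|lia].
  - intros j _ Hji. destruct Nat.eq_dec; [lia|ring].
Qed.

Lemma fsum_swap k l (f : nat -> nat -> R) :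
  fsum k (fun i => fsum l (fun j => f i j)) = fsum l (fun j => fsum k (fun i => f i j)).
Proof.
  induction k; simpl.
  - rewrite fsum_zero; auto.
  - rewrite IHk, <- fsum_plus. auto.
Qed.

Lemma fsum_nonneg_zero k f : (forall i, (i < k)%nat -> 0 <= f i) -> fsum k f = 0 ->
  forall i, (i < k)%nat -> f i = 0.
Proof.
  induction k; simpl; intros H1 H2 i Hi; [lia|].
  assert (0 <= fsum k f) by (apply fsum_nonneg; intros; apply H1; lia).
  assert (0 <= f k) by (apply H1; lia).
  destruct (Nat.eq_dec i k); [subst; lra|].
  apply IHk; try lra; try lia. intros; apply H1; lia.
Qed.

Lemma fsum_ge_term k f i : (i < k)%nat -> (forall j, (j < k)%nat -> 0 <= f j) -> f i <= fsum k f.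
Proof.
  intros Hi H. induction k; [lia|]. simpl. destruct (Nat.eq_dec i k).
  - subst. pose proof (fsum_nonneg k f ltac:(intros; apply H; lia)). lra.
  - pose proof (IHk ltac:(lia) ltac:(intros; apply H; lia)). pose proof (H k ltac:(lia)). lra.
Qed.

Lemma fsum_pos k f i0 : (forall i, (i < k)%nat -> 0 <= f i) -> (i0 < k)%nat -> 0 < f i0 ->
  0 < fsum k f.
Proof. intros H1 H2 H3. pose proof (fsum_ge_term k f i0 H2 H1). lra. Qed.

Lemma fsum_pos_term k f : 0 < fsum k f -> exists i, (i < k)%nat /\ 0 < f i.
Proof.
  intros H. apply NNPP. intros Hn.
  assert (fsum k f <= fsum k (fun _ => 0)).
  { apply fsum_le. intros i Hi. apply Rnot_lt_le. intros Hf. apply Hn. eauto. }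
  rewrite (fsum_zero k (fun _ => 0)) in H0 by auto. lra.
Qed.

End FiniteSums.

Lemma dot_S N g v : dot (S N) g v = dot N g v + g N * v N.
Proof. reflexivity. Qed.

Lemma dot_ext_l n u u' v : (forall j, (j < n)%nat -> u j = u' j) -> dot n u v = dot n u' v.
Proof. intros H; unfold dot; apply fsum_ext; intros; rewrite H; auto. Qed.

Lemma dot_ext_r n u v v' : (forall j, (j < n)%nat -> v j = v' j) -> dot n u v = dot n u v'.
Proof. intros H; unfold dot; apply fsum_ext; intros; rewrite H; auto. Qed.

Lemma dot_lin_l n c1 u1 c2 u2 v :
  dot n (fun j => c1 * u1 j + c2 * u2 j) v = c1 * dot n u1 v + c2 * dot n u2 v.
Proof. unfold dot. rewrite <- !fsum_scal, <- fsum_plus. apply fsum_ext; intros; ring. Qed.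

Lemma dot_lin_r n u c1 v1 c2 v2 :
  dot n u (fun j => c1 * v1 j + c2 * v2 j) = c1 * dot n u v1 + c2 * dot n u v2.
Proof. unfold dot. rewrite <- !fsum_scal, <- fsum_plus. apply fsum_ext; intros; ring. Qed.

Lemma dot_comb n m (lam : nat -> R) (a : nat -> nat -> R) p x :
  (forall j, (j < n)%nat -> p j = fsum m (fun i => lam i * a i j)) ->
  dot n p x = fsum m (fun i => lam i * dot n (a i) x).
Proof.
  intros H. unfold dot.
  rewrite (fsum_ext n _ (fun j => fsum m (fun i => lam i * a i j * x j))).
  - rewrite fsum_swap. apply fsum_ext. intros. rewrite <- fsum_scal. apply fsum_ext; intros; ring.
  - intros. rewrite H, <- fsum_scalr by auto. auto.
Qed.

(** * Farkas' lemma by Fourier–Motzkin elimination *)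

Definition row : Type := ((nat -> R) * R)%type.
Definition sat (N : nat) (v : nat -> R) (r : row) : Prop := dot N (fst r) v <= snd r.
Definition rscale (c : R) (r : row) : row := (fun j => c * fst r j, c * snd r).
Definition radd (r1 r2 : row) : row := (fun j => fst r1 j + fst r2 j, snd r1 + snd r2).

Inductive derivable (sys : list row) : row -> Prop :=
| dv_in r : In r sys -> derivable sys r
| dv_scale c r : 0 < c -> derivable sys r -> derivable sys (rscale c r)
| dv_add r1 r2 : derivable sys r1 -> derivable sys r2 -> derivable sys (radd r1 r2).

Lemma derivable_trans sys sys' r :
  (forall r', In r' sys' -> derivable sys r') -> derivable sys' r -> derivable sys r.
Proof. intros H D; induction D; auto; [apply dv_scale|apply dv_add]; auto. Qed.

Lemma exists_between (Us Ls : list R) : (forall u l, In u Us -> In l Ls -> l <= u) ->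
  exists x, (forall u, In u Us -> x <= u) /\ (forall l, In l Ls -> l <= x).
Proof.
  intros H. destruct Ls as [|l0 Ls].
  - exists (fold_right Rmin 0 Us). split; [|simpl; tauto].
    clear H. induction Us; simpl; [tauto|]. intros u [->|Hu]; [apply Rmin_l|].
    eapply Rle_trans; [apply Rmin_r|]. auto.
  - assert (Hm : forall L, (forall l, In l L -> l <= fold_right Rmax l0 L) /\
        (fold_right Rmax l0 L = l0 \/ In (fold_right Rmax l0 L) L)).
    { induction L; simpl; [split; [tauto|left; auto]|]. destruct IHL as [IH1 IH2]. split.
      + intros l [->|Hl]; [apply Rmax_l|]. eapply Rle_trans; [apply IH1; auto|apply Rmax_r].
      + destruct (Rle_dec a (fold_right Rmax l0 L)) as [h|h];
          [rewrite Rmax_right by lra|rewrite Rmax_left by lra];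
          [destruct IH2; [left|right; right]; auto|right; left; auto]. }
    destruct (Hm Ls) as [Hm1 Hm2].
    exists (fold_right Rmax l0 Ls). split.
    + intros u Hu. destruct Hm2 as [->|Hin]; apply H; simpl; auto.
    + intros l [<-|Hl]; [|apply Hm1; auto].
      clear Hm1 Hm2 H. induction Ls; simpl; [lra|]. eapply Rle_trans; [apply IHLs|apply Rmax_r].
Qed.

Section FourierMotzkin.

Variable N : nat.

Definition isP (r : row) : bool := if Rlt_dec 0 (fst r N) then true else false.
Definition isQ (r : row) : bool := if Rlt_dec (fst r N) 0 then true else false.
Definition isZ (r : row) : bool := if Req_EM_T (fst r N) 0 then true else false.

(* The positive combination of [p] and [q] cancelling coordinate [N]. *)
Definition comb (p q : row) : row := radd (rscale (/ fst p N) p) (rscale (/ (- fst q N)) q).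

Definition fmstep (sys : list row) : list row :=
  filter isZ sys ++ flat_map (fun p => map (fun q => comb p q) (filter isQ sys)) (filter isP sys).

Lemma in_fmstep sys r : In r (fmstep sys) ->
  (In r sys /\ fst r N = 0) \/
  (exists p q, In p sys /\ In q sys /\ 0 < fst p N /\ fst q N < 0 /\ r = comb p q).
Proof.
  unfold fmstep. rewrite in_app_iff. intros [H|H].
  - apply filter_In in H. destruct H as [H1 H2]. unfold isZ in H2.
    destruct Req_EM_T; try discriminate. left; auto.
  - apply in_flat_map in H. destruct H as [p [Hp Hr]]. apply in_map_iff in Hr.
    destruct Hr as [q [<- Hq]]. apply filter_In in Hp; apply filter_In in Hq.
    destruct Hp as [Hp1 Hp2]; destruct Hq as [Hq1 Hq2]. unfold isP in Hp2; unfold isQ in Hq2.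
    destruct Rlt_dec; try discriminate. destruct Rlt_dec; try discriminate.
    right. exists p, q. auto.
Qed.

Lemma fmstep_derivable sys r : In r (fmstep sys) -> derivable sys r.
Proof.
  intros Hr. apply in_fmstep in Hr. destruct Hr as [[Hr _]|[p [q [Hp [Hq [gp [gq ->]]]]]]].
  - constructor; auto.
  - apply dv_add; apply dv_scale; try (constructor; auto); apply Rinv_0_lt_compat; lra.
Qed.

Lemma fmstep_eliminates sys r : derivable (fmstep sys) r -> fst r N = 0.
Proof.
  induction 1 as [r Hr|c r _ _ IH|r1 r2 _ IH1 _ IH2]; unfold rscale, radd; simpl.
  - apply in_fmstep in Hr.
    destruct Hr as [[_ H']|[p [q [_ [_ [Hp [Hq ->]]]]]]]; auto.
    unfold comb, radd, rscale; simpl. field. lra.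
  - rewrite IH; ring.
  - rewrite IH1, IH2; ring.
Qed.

(* The bound on coordinate [N] imposed by a row with nonzero [N]-th entry. *)
Let bound (w : nat -> R) (r : row) : R := (snd r - dot N (fst r) w) / fst r N.

Lemma fm_pair_bound w p q : 0 < fst p N -> fst q N < 0 ->
  sat N w (comb p q) -> bound w q <= bound w p.
Proof.
  intros gp gq Hw. unfold sat, comb, radd, rscale in Hw; simpl in Hw.
  rewrite dot_lin_l in Hw. unfold bound.
  set (dp := dot N (fst p) w) in *. set (dq := dot N (fst q) w) in *.
  set (a1 := fst p N) in *. set (b1 := fst q N) in *.
  apply (Rmult_le_reg_r (a1 * - b1)); [nra|].
  replace ((snd q - dq) / b1 * (a1 * - b1)) with (- a1 * (snd q - dq)) by (field; lra).
  replace ((snd p - dp) / a1 * (a1 * - b1)) with (- b1 * (snd p - dp)) by (field; lra).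
  assert (Hm := Rmult_le_compat_l (a1 * - b1) _ _ ltac:(nra) Hw).
  replace (a1 * - b1 * (/ a1 * dp + / - b1 * dq)) with (- b1 * dp + a1 * dq) in Hm
    by (field; lra).
  replace (a1 * - b1 * (/ a1 * snd p + / - b1 * snd q)) with (- b1 * snd p + a1 * snd q) in Hm
    by (field; lra).
  lra.
Qed.

Lemma fm_lift sys w : Forall (sat N w) (fmstep sys) -> exists v, Forall (sat (S N) v) sys.
Proof.
  intros Hw. rewrite Forall_forall in Hw.
  destruct (exists_between (map (bound w) (filter isP sys)) (map (bound w) (filter isQ sys)))
    as [x [Hx1 Hx2]].
  { intros u l Hu Hl. apply in_map_iff in Hu; apply in_map_iff in Hl.
    destruct Hu as [p [<- Hp]]; destruct Hl as [q [<- Hq]].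
    assert (Hc : In (comb p q) (fmstep sys)).
    { unfold fmstep. apply in_or_app; right. apply in_flat_map. exists p; split; auto.
      apply in_map; auto. }
    apply filter_In in Hp; apply filter_In in Hq.
    destruct Hp as [_ Hp]; destruct Hq as [_ Hq]. unfold isP in Hp; unfold isQ in Hq.
    destruct Rlt_dec; try discriminate. destruct Rlt_dec; try discriminate.
    apply fm_pair_bound; auto. }
  exists (fun j => if Nat.eq_dec j N then x else w j).
  rewrite Forall_forall. intros r Hr. unfold sat. rewrite dot_S.
  destruct (Nat.eq_dec N N) as [_|]; [|lia].
  rewrite (dot_ext_r N (fst r) _ w) by (intros j Hj; destruct Nat.eq_dec; [lia|auto]).
  destruct (Rlt_dec 0 (fst r N)) as [gp|].
  - assert (Hb : x <= bound w r).
    { apply Hx1, in_map, filter_In. unfold isP. destruct Rlt_dec; auto. }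
    unfold bound in Hb. apply (Rmult_le_compat_l (fst r N)) in Hb; [|lra].
    replace (fst r N * ((snd r - dot N (fst r) w) / fst r N)) with (snd r - dot N (fst r) w)
      in Hb by (field; lra). lra.
  - destruct (Rlt_dec (fst r N) 0) as [gq|].
    + assert (Hb : bound w r <= x).
      { apply Hx2, in_map, filter_In. unfold isQ. destruct Rlt_dec; auto. }
      unfold bound in Hb. apply (Rmult_le_compat_l (- fst r N)) in Hb; [|lra].
      replace (- fst r N * ((snd r - dot N (fst r) w) / fst r N))
        with (- (snd r - dot N (fst r) w)) in Hb by (field; lra). lra.
    + assert (Hz : fst r N = 0) by lra.
      assert (In r (fmstep sys)).
      { unfold fmstep. apply in_or_app; left. apply filter_In. split; auto.
        unfold isZ. destruct Req_EM_T; auto. }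
      specialize (Hw _ H). unfold sat in Hw. rewrite Hz. lra.
Qed.

End FourierMotzkin.

Theorem farkas N sys : (forall v, ~ Forall (sat N v) sys) ->
  exists r, derivable sys r /\ (forall j, (j < N)%nat -> fst r j = 0) /\ snd r < 0.
Proof.
  revert sys. induction N; intros sys H.
  - specialize (H (fun _ => 0)). apply NNPP. intros Hn. apply H.
    rewrite Forall_forall. intros r Hr. apply NNPP. intros Hs. apply Hn.
    exists r. split; [constructor; auto|]. split; [intros; lia|].
    unfold sat, dot in Hs. simpl in Hs. lra.
  - destruct (IHN (fmstep N sys)) as [r [D [Hz Hneg]]].
    { intros w Hw. destruct (fm_lift N sys w Hw) as [v Hv]. apply (H v); auto. }
    exists r. split; [|split; auto].
    + apply (derivable_trans _ (fmstep N sys)); auto. apply fmstep_derivable.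
    + intros j Hj. destruct (Nat.eq_dec j N); [subst; apply (fmstep_eliminates N sys); auto|].
      apply Hz; lia.
Qed.

Lemma in_flat_seq {A} (F : nat -> list A) m r :
  In r (flat_map F (seq 0 m)) -> exists i, (i < m)%nat /\ In r (F i).
Proof.
  intros H. apply in_flat_map in H. destruct H as [i [Hi Hr]]. apply in_seq in Hi.
  exists i; split; auto; lia.
Qed.

Lemma in_flat_seq' {A} (F : nat -> list A) m r i :
  (i < m)%nat -> In r (F i) -> In r (flat_map F (seq 0 m)).
Proof. intros Hi H. apply in_flat_map. exists i; split; auto. apply in_seq; lia. Qed.

Section MixedFarkas.

(* Rows [i < m] with [Eqn i] are equations [dot N (g i) v = b i], rows with [Ineq i]
   inequalities [dot N (g i) v <= b i]; the remaining rows are ignored. *)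
Variables (N m : nat) (g : nat -> nat -> R) (b : nat -> R) (Eqn Ineq : nat -> Prop).

Definition mixed_feasible (v : nat -> R) : Prop :=
  (forall i, (i < m)%nat -> Eqn i -> dot N (g i) v = b i) /\
  (forall i, (i < m)%nat -> Ineq i -> dot N (g i) v <= b i).

Definition mixed_multiplier (pi : nat -> R) : Prop :=
  (forall i, (i < m)%nat -> ~ Eqn i -> ~ Ineq i -> pi i = 0) /\
  (forall i, (i < m)%nat -> ~ Eqn i -> 0 <= pi i).

Let rows : list row :=
  flat_map (fun i => (if pdec (Eqn i) then [(g i, b i); (fun j => - g i j, - b i)] else [])
                     ++ (if pdec (Ineq i) then [(g i, b i)] else [])) (seq 0 m).

Let represented (r : row) : Prop := exists pi, mixed_multiplier pi /\
  (forall j, fst r j = fsum m (fun i => pi i * g i j)) /\ snd r = fsum m (fun i => pi i * b i).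

Lemma mixed_row_represented i c r : (i < m)%nat -> (Eqn i \/ (Ineq i /\ 0 < c)) ->
  (forall j, fst r j = c * g i j) -> snd r = c * b i -> represented r.
Proof.
  intros Hi Hc Hg Hb. exists (fun k => c * delta i k). repeat split.
  - intros k _ HE HI. unfold delta. destruct Nat.eq_dec; [subst; tauto|ring].
  - intros k _ HE. unfold delta. destruct Nat.eq_dec; [subst; destruct Hc; [tauto|lra]|lra].
  - intros j. rewrite Hg, <- (fsum_delta m i (fun k => c * g k j)) by auto.
    apply fsum_ext; intros; ring.
  - rewrite Hb, <- (fsum_delta m i (fun k => c * b k)) by auto.
    apply fsum_ext; intros; ring.
Qed.

Lemma derivable_represented r : derivable rows r -> represented r.
Proof.
  induction 1 as [r Hr|c r Hc _ [pi [[P1 P2] [P3 P4]]]|r1 r2 _ [p1 [[P1 P2] [P3 P4]]]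
                 _ [p2 [[Q1 Q2] [Q3 Q4]]]].
  - apply in_flat_seq in Hr. destruct Hr as [i [Hi Hr]]. apply in_app_iff in Hr.
    destruct Hr as [Hr|Hr].
    + destruct (pdec (Eqn i)) as [HE|HE]; [|contradiction].
      destruct Hr as [<-|[<-|[]]].
      * apply (mixed_row_represented i 1); auto; intros; simpl; ring.
      * apply (mixed_row_represented i (-1)); auto; intros; simpl; ring.
    + destruct (pdec (Ineq i)) as [HI|HI]; [|contradiction].
      destruct Hr as [<-|[]].
      apply (mixed_row_represented i 1); [auto|right; split; [auto|lra]| |];
        intros; simpl; ring.
  - exists (fun i => c * pi i). unfold rscale; simpl. repeat split.
    + intros; rewrite P1; auto; ring.
    + intros; apply Rmult_le_pos; [lra|auto].
    + intros j. rewrite P3, <- fsum_scal. apply fsum_ext; intros; ring.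
    + rewrite P4, <- fsum_scal. apply fsum_ext; intros; ring.
  - exists (fun i => p1 i + p2 i). unfold radd; simpl. repeat split.
    + intros; rewrite P1, Q1; auto; ring.
    + intros; apply Rplus_le_le_0_compat; auto.
    + intros j. rewrite P3, Q3, <- fsum_plus. apply fsum_ext; intros; ring.
    + rewrite P4, Q4, <- fsum_plus. apply fsum_ext; intros; ring.
Qed.

Theorem farkas_mixed : ~ (exists v, mixed_feasible v) ->
  exists pi, mixed_multiplier pi /\
    (forall j, (j < N)%nat -> fsum m (fun i => pi i * g i j) = 0) /\
    fsum m (fun i => pi i * b i) < 0.
Proof.
  intros Hno. destruct (farkas N rows) as [r [D [Hz Hn]]].
  - intros v Hv. apply Hno. exists v. rewrite Forall_forall in Hv.
    assert (Hrow : forall i r, (i < m)%nat -> In r (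
        (if pdec (Eqn i) then [(g i, b i); (fun j => - g i j, - b i)] else [])
        ++ (if pdec (Ineq i) then [(g i, b i)] else [])) -> sat N v r)
      by (intros i r Hi Hr; apply Hv, (in_flat_seq' _ _ _ i Hi Hr)).
    split.
    + intros i Hi HE.
      assert (H1 := Hrow i (g i, b i) Hi). assert (H2 := Hrow i (fun j => - g i j, - b i) Hi).
      destruct (pdec (Eqn i)); [|contradiction]. unfold sat in H1, H2; simpl in H1, H2.
      assert (Hneg : dot N (fun j => - g i j) v = - dot N (g i) v).
      { rewrite (dot_ext_l N _ (fun j => -1 * g i j + 0 * g i j)) by (intros; ring).
        rewrite dot_lin_l. ring. }
      rewrite Hneg in H2. specialize (H1 ltac:(simpl; auto)).
      specialize (H2 ltac:(simpl; auto)). lra.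
    + intros i Hi HI. apply (Hrow i (g i, b i) Hi). apply in_or_app; right.
      destruct pdec; [simpl; auto|contradiction].
  - destruct (derivable_represented r D) as [pi [Hpi [H1 H2]]].
    exists pi. split; auto. split; [intros j Hj; rewrite <- H1; auto|rewrite <- H2; auto].
Qed.

End MixedFarkas.

(** * Convex geometry of the columns *)

Definition lift_col (n : nat) (u : nat -> R) : nat -> R :=
  fun j => if Nat.eq_dec j n then 1 else u j.

Lemma dot_lift_col n u v : dot (S n) (lift_col n u) v = dot n u v + v n.
Proof.
  rewrite dot_S. unfold lift_col at 2. destruct Nat.eq_dec; [|lia].
  rewrite (dot_ext_l n _ u); [ring|]. intros j Hj. unfold lift_col. destruct Nat.eq_dec; [lia|auto].
Qed.

Lemma aff_indep_solve n m a (E : nat -> Prop) : aff_indep_cols n m a E -> forall z : nat -> R,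
  exists x s, forall i, (i < m)%nat -> E i -> dot n (a i) x + s = z i.
Proof.
  intros HA z. apply NNPP. intros Hno.
  destruct (farkas_mixed (S n) m (fun i => lift_col n (a i)) z E (fun _ => False))
    as [pi [[M1 _] [Hz Hneg]]].
  { intros [v [Hv _]]. apply Hno. exists v, (v n). intros i Hi HE.
    rewrite <- dot_lift_col. auto. }
  assert (Hpi : forall i, (i < m)%nat -> pi i = 0).
  { intros i Hi. destruct (classic (E i)) as [HE|HE]; [|apply M1; auto].
    apply (HA pi); auto.
    - rewrite <- (Hz n) by lia. apply fsum_ext. intros k _. unfold lift_col.
      destruct Nat.eq_dec; [ring|lia].
    - intros j Hj. rewrite <- (Hz j) by lia. apply fsum_ext. intros k _. unfold lift_col.
      destruct Nat.eq_dec; [lia|ring]. }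
  rewrite fsum_zero in Hneg; [lra|]. intros i Hi. rewrite Hpi; auto; ring.
Qed.

Section Columns.

Variables (n m : nat) (a : nat -> nat -> R).

Lemma conv_self (S : nat -> Prop) i : (i < m)%nat -> S i -> conv_cols n m a S (a i).
Proof.
  intros Hi HS. exists (delta i). repeat split.
  - intros k _. unfold delta; destruct Nat.eq_dec; lra.
  - intros k _ Hk. unfold delta; destruct Nat.eq_dec; [subst; tauto|auto].
  - rewrite (fsum_ext _ _ (fun k => delta i k * 1)) by (intros; ring). rewrite fsum_delta; auto.
  - intros j _. rewrite fsum_delta; auto.
Qed.

Lemma conv_ext (S : nat -> Prop) p p' :
  conv_cols n m a S p -> (forall j, (j < n)%nat -> p j = p' j) -> conv_cols n m a S p'.
Proof. intros [l [L1 [L2 [L3 L4]]]] H. exists l. repeat split; auto. intros j Hj. rewrite <- H; auto. Qed.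

Lemma conv_single i p : (i < m)%nat -> conv_cols n m a (fun k => k = i) p ->
  forall j, (j < n)%nat -> p j = a i j.
Proof.
  intros Hi [l [L1 [L2 [L3 L4]]]] j Hj.
  assert (Hz : forall k, (k < m)%nat -> k <> i -> l k = 0) by (intros; apply L2; auto).
  rewrite (fsum_single m l i Hi Hz) in L3. rewrite L4 by auto. rewrite (fsum_single m _ i Hi).
  - rewrite L3; ring.
  - intros k Hk Hne. rewrite Hz; auto; ring.
Qed.

Lemma face_pull (S : nat -> Prop) (F : (nat -> R) -> Prop) (mu z : nat -> R) i0 :
  is_face n F (conv_cols n m a S) ->
  (forall i, (i < m)%nat -> 0 <= mu i) -> (forall i, (i < m)%nat -> ~ S i -> mu i = 0) ->
  fsum m mu = 1 -> (forall j, (j < n)%nat -> z j = fsum m (fun i => mu i * a i j)) -> F z ->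
  (i0 < m)%nat -> 0 < mu i0 -> F (a i0).
Proof.
  intros [_ [_ Hf]] M1 M2 M3 M4 Fz Hi0 Hpos.
  assert (HS0 : S i0) by (apply NNPP; intros Hn; rewrite (M2 i0) in Hpos; auto; lra).
  set (nu := fun i => if Nat.eq_dec i i0 then 0 else mu i).
  assert (Hmu : forall i, mu i = nu i + delta i0 i * mu i0).
  { intros i. unfold nu, delta. destruct Nat.eq_dec; subst; ring. }
  assert (Hsum : fsum m nu = 1 - mu i0).
  { rewrite <- M3, (fsum_ext m mu (fun i => nu i + delta i0 i * mu i0)) by (intros; apply Hmu).
    rewrite fsum_plus, (fsum_delta m i0 (fun _ => mu i0)) by auto. ring. }
  assert (Hnu : forall i, (i < m)%nat -> 0 <= nu i)
    by (intros; unfold nu; destruct Nat.eq_dec; [lra|auto]).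
  assert (Hz : forall j, (j < n)%nat -> z j = fsum m (fun i => nu i * a i j) + mu i0 * a i0 j).
  { intros j Hj. rewrite M4 by auto.
    rewrite (fsum_ext m _ (fun i => nu i * a i j + delta i0 i * (mu i0 * a i j)))
      by (intros; rewrite Hmu; ring).
    rewrite fsum_plus, fsum_delta; auto. }
  destruct (Req_dec (mu i0) 1) as [E1|E1].
  - assert (H0 : forall i, (i < m)%nat -> nu i = 0) by (apply fsum_nonneg_zero; auto; lra).
    apply (Hf (a i0) (a i0) z); try (apply conv_self; auto); auto.
    exists (1/2). split; [lra|]. intros j Hj. rewrite Hz by auto. rewrite fsum_zero; [rewrite E1; ring|].
    intros; rewrite H0; auto; ring.
  - assert (Hlt : mu i0 < 1) by (pose proof (fsum_nonneg m nu Hnu); lra).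
    set (z' := fun j => fsum m (fun i => nu i / (1 - mu i0) * a i j)).
    apply (Hf (a i0) z' z); try (apply conv_self; auto); auto.
    + exists (fun i => nu i / (1 - mu i0)). repeat split.
      * intros i Hi. apply Rmult_le_pos; auto. apply Rlt_le, Rinv_0_lt_compat; lra.
      * intros i Hi HS. unfold nu. destruct Nat.eq_dec; [subst; tauto|].
        rewrite M2; auto. unfold Rdiv; ring.
      * unfold Rdiv. rewrite fsum_scalr, Hsum. field. lra.
    + exists (mu i0). split; [lra|]. intros j Hj. rewrite Hz by auto. unfold z'.
      rewrite (fsum_ext m (fun i => nu i / _ * _) (fun i => / (1 - mu i0) * (nu i * a i j)))
        by (intros; unfold Rdiv; ring).
      rewrite fsum_scal. field. lra.
Qed.

Definition centroid_w (S : nat -> Prop) (i : nat) : R := ind (S i) / fsum m (fun k => ind (S k)).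

Lemma centroid_w_spec (S : nat -> Prop) : (exists i0, (i0 < m)%nat /\ S i0) ->
  0 < fsum m (fun k => ind (S k)) /\ fsum m (centroid_w S) = 1.
Proof.
  intros [i0 [Hi0 HS0]].
  assert (Hk : 0 < fsum m (fun k => ind (S k))).
  { apply (fsum_pos _ _ i0); auto. intros; apply ind_ge0. rewrite ind_T; auto; lra. }
  split; auto. unfold centroid_w, Rdiv. rewrite fsum_scalr. field. lra.
Qed.

Lemma centroid_conv (S : nat -> Prop) : (exists i0, (i0 < m)%nat /\ S i0) ->
  conv_cols n m a S (fun j => fsum m (fun i => centroid_w S i * a i j)).
Proof.
  intros Hne. destruct (centroid_w_spec S Hne) as [Hk Hc]. exists (centroid_w S). repeat split; auto.
  - intros i _. unfold centroid_w, Rdiv. apply Rmult_le_pos; [apply ind_ge0|].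
    apply Rlt_le, Rinv_0_lt_compat; lra.
  - intros i _ H. unfold centroid_w. rewrite ind_F by auto. unfold Rdiv; ring.
Qed.

Lemma conv_push_beyond_centroid (S : nat -> Prop) (nu : nat -> R) :
  (exists i0, (i0 < m)%nat /\ S i0) -> (forall i, (i < m)%nat -> ~ S i -> nu i = 0) ->
  fsum m nu = 1 -> exists eps, 0 < eps /\ conv_cols n m a S (fun j =>
    (1 + eps) * fsum m (fun i => centroid_w S i * a i j) - eps * fsum m (fun i => nu i * a i j)).
Proof.
  intros Hne Hnu Hsum. destruct (centroid_w_spec S Hne) as [Hk Hc].
  set (k := fsum m (fun k => ind (S k))) in *.
  set (B := fsum m (fun i => Rabs (nu i))).
  assert (HB : 0 <= B) by (apply fsum_nonneg; intros; apply Rabs_pos).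
  set (eps := / (k * (1 + B))).
  assert (Heps : 0 < eps) by (apply Rinv_0_lt_compat; nra).
  exists eps. split; auto.
  exists (fun i => (1 + eps) * centroid_w S i - eps * nu i). repeat split.
  - intros i Hi. destruct (classic (S i)) as [HS|HS].
    + unfold centroid_w. rewrite ind_T by auto. fold k.
      assert (Hnb : Rabs (nu i) <= B)
        by (apply (fsum_ge_term m (fun i => Rabs (nu i))); auto; intros; apply Rabs_pos).
      pose proof (Rle_abs (nu i)).
      assert (eps * k * (1 + B) = 1) by (unfold eps; field; nra).
      apply (Rmult_le_reg_l k); [lra|]. field_simplify; [|lra]. nra.
    + unfold centroid_w. rewrite ind_F, Hnu by auto. unfold Rdiv; lra.
  - intros i Hi HS. unfold centroid_w. rewrite ind_F, Hnu by auto. unfold Rdiv; ring.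
  - rewrite fsum_minus, !fsum_scal, Hc, Hsum. ring.
  - intros j Hj. rewrite <- !fsum_scal, <- fsum_minus. apply fsum_ext; intros; ring.
Qed.

End Columns.

Lemma ind_compl (P : Prop) : ind P + ind (~ P) = 1.
Proof. destruct (classic P); [rewrite ind_T, ind_F|rewrite ind_F, ind_T]; auto; lra. Qed.

Section ExposedFace.

Variables (n m : nat) (a : nat -> nat -> R) (J J' : nat -> Prop).
Hypothesis HJJ : forall i, J' i -> J i.
Hypothesis HJne : exists i0, (i0 < m)%nat /\ J' i0.
Hypothesis Hface : is_face n (conv_cols n m a J') (conv_cols n m a J).
Hypothesis Hout : forall i, (i < m)%nat -> J i -> ~ J' i -> ~ conv_cols n m a J' (a i).

(* Beyond [z] the centroid [q] of the face can be pushed to some [q'] in the face, and then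
   [q] lies in the open segment between [z] and [q']. *)
Lemma face_contains_affine_point (z nu : nat -> R) : conv_cols n m a J z ->
  (forall i, (i < m)%nat -> ~ J' i -> nu i = 0) -> fsum m nu = 1 ->
  (forall j, (j < n)%nat -> z j = fsum m (fun i => nu i * a i j)) -> conv_cols n m a J' z.
Proof.
  intros Cz Hnu0 Hnu1 Hz.
  destruct (conv_push_beyond_centroid n m a J' nu) as [eps [Heps Hq']]; auto.
  destruct Hface as [HFC [_ Hf]].
  refine (proj1 (Hf z _ _ Cz (HFC _ Hq') _ (centroid_conv n m a J' HJne))).
  exists (eps / (1 + eps)). split.
  - split; [apply Rdiv_lt_0_compat; lra|]. apply (Rmult_lt_reg_r (1 + eps)); [lra|].
    field_simplify; lra.
  - intros j Hj. rewrite <- Hz by auto. field. lra.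
Qed.

(* Rescaled, a Farkas certificate against exposedness writes one point [z] both as a convex
   combination [mu] of the columns in [J] outside [J'] and as an affine combination [nu] of
   the columns in [J']. *)
Lemma exposing_certificate_absurd (pi : nat -> R) :
  (forall i, (i < m)%nat -> ~ J i -> pi i = 0) -> (forall i, (i < m)%nat -> ~ J' i -> 0 <= pi i) ->
  fsum m pi = 0 -> (forall j, (j < n)%nat -> fsum m (fun i => pi i * a i j) = 0) ->
  0 < fsum m (fun i => ind (~ J' i) * pi i) -> False.
Proof.
  intros P1 P2 P3 P4 HM. set (M := fsum m (fun i => ind (~ J' i) * pi i)) in *.
  set (mu := fun i => ind (~ J' i) * pi i / M).
  set (nu := fun i => - (ind (J' i) * pi i) / M).
  assert (Hmu0 : forall i, (i < m)%nat -> 0 <= mu i).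
  { intros i Hi. unfold mu. destruct (classic (J' i)) as [H|H].
    - rewrite ind_F by tauto. unfold Rdiv; lra.
    - rewrite ind_T by auto. unfold Rdiv. apply Rmult_le_pos; [|apply Rlt_le, Rinv_0_lt_compat; lra].
      rewrite Rmult_1_l; auto. }
  assert (Hmu1 : fsum m mu = 1) by (unfold mu, Rdiv; rewrite fsum_scalr; fold M; field; lra).
  assert (Hmu2 : forall i, (i < m)%nat -> ~ J i -> mu i = 0)
    by (intros; unfold mu; rewrite P1; auto; unfold Rdiv; ring).
  assert (Hnu : forall f, fsum m (fun i => pi i * f i) = 0 ->
            fsum m (fun i => nu i * f i) = fsum m (fun i => mu i * f i)).
  { intros f Hf.
    assert (Hs : fsum m (fun i => pi i * f i)
                 = fsum m (fun i => - M * (nu i * f i)) + M * fsum m (fun i => mu i * f i)).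
    { rewrite <- fsum_scal, <- fsum_plus. apply fsum_ext. intros i _. unfold mu, nu.
      pose proof (ind_compl (J' i)). replace (ind (J' i)) with (1 - ind (~ J' i)) by lra.
      field. lra. }
    rewrite fsum_scal, Hf in Hs. apply (Rmult_eq_reg_l M); nra. }
  set (z := fun j => fsum m (fun i => mu i * a i j)).
  assert (Fz : conv_cols n m a J' z).
  { apply (face_contains_affine_point z nu).
    - exists mu; repeat split; auto.
    - intros i Hi HJ'. unfold nu. rewrite ind_F by auto. unfold Rdiv; ring.
    - transitivity (fsum m (fun i => nu i * 1)); [apply fsum_ext; intros; ring|].
      rewrite Hnu; [transitivity (fsum m mu); [apply fsum_ext; intros; ring|exact Hmu1]|].
      rewrite <- P3. apply fsum_ext; intros; ring.
    - intros j Hj. unfold z. rewrite Hnu; auto. }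
  destruct (fsum_pos_term m mu ltac:(lra)) as [i1 [Hi1 Hpos]].
  assert (HS1 : J i1) by (apply NNPP; intros H; rewrite Hmu2 in Hpos; auto; lra).
  assert (HS1' : ~ J' i1).
  { intros H. unfold mu in Hpos. rewrite ind_F in Hpos by tauto. unfold Rdiv in Hpos; lra. }
  apply (Hout i1 Hi1 HS1 HS1'), (face_pull n m a J _ mu z i1); auto.
Qed.

Lemma face_exposed : exists v beta,
  (forall i, (i < m)%nat -> J' i -> dot n (a i) v = beta) /\
  (forall i, (i < m)%nat -> J i -> ~ J' i -> dot n (a i) v <= beta - 1).
Proof.
  apply NNPP. intros Hno.
  destruct (farkas_mixed (S n) m (fun i => lift_col n (a i)) (fun i => - ind (~ J' i))
              J' (fun i => J i /\ ~ J' i)) as [pi [[M1 M2] [Hz Hneg]]].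
  { intros [v [V1 V2]]. apply Hno. exists v, (- v n). split.
    - intros i Hi HS'. specialize (V1 i Hi HS'). rewrite dot_lift_col, ind_F in V1 by tauto. lra.
    - intros i Hi HS HS'. specialize (V2 i Hi (conj HS HS')).
      rewrite dot_lift_col, ind_T in V2 by auto. lra. }
  apply (exposing_certificate_absurd pi).
  - intros i Hi HS. apply M1; auto; tauto.
  - intros i Hi HS'. apply M2; auto.
  - rewrite <- (Hz n) by lia. apply fsum_ext. intros k _. unfold lift_col.
    destruct Nat.eq_dec; [ring|lia].
  - intros j Hj. rewrite <- (Hz j) by lia. apply fsum_ext. intros k _. unfold lift_col.
    destruct Nat.eq_dec; [lia|ring].
  - rewrite (fsum_ext m _ (fun i => -1 * (pi i * - ind (~ J' i)))) by (intros; ring).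
    rewrite fsum_scal. lra.
Qed.

End ExposedFace.

(** * Signomial cones *)

Lemma exp_le x y : x <= y -> exp x <= exp y.
Proof. intros [H|H]; [apply Rlt_le, exp_increasing; auto|subst; lra]. Qed.

Lemma ln_le x y : 0 < x -> x <= y -> ln x <= ln y.
Proof. intros H [H'|H']; [apply Rlt_le, ln_increasing; auto|subst; lra]. Qed.

Definition restrict (J : nat -> Prop) (c : nat -> R) : nat -> R := fun i => ind (J i) * c i.

Section Cones.

Variables (n m : nat) (a : nat -> nat -> R).

Lemma Sig_ext c c' x : (forall i, (i < m)%nat -> c i = c' i) -> Sig n m a c x = Sig n m a c' x.
Proof. intros H; unfold Sig; apply fsum_ext; intros; rewrite H; auto. Qed.

Lemma NNS_ext c c' : (forall i, (i < m)%nat -> c i = c' i) -> C_NNS n m a c -> C_NNS n m a c'.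
Proof. intros H N x. rewrite <- (Sig_ext c c'); auto. Qed.

Lemma NNS_plus c1 c2 : C_NNS n m a c1 -> C_NNS n m a c2 -> C_NNS n m a (fun i => c1 i + c2 i).
Proof.
  intros H1 H2 x. unfold Sig. rewrite (fsum_ext m _ (fun i => c1 i * exp (dot n (a i) x)
    + c2 i * exp (dot n (a i) x))) by (intros; ring).
  rewrite fsum_plus. specialize (H1 x); specialize (H2 x). unfold Sig in *. lra.
Qed.

Lemma NNS_zero : C_NNS n m a (fun _ => 0).
Proof. intros x. unfold Sig. rewrite fsum_zero; [lra|]. intros; ring. Qed.

Lemma AGE_zero k : C_AGE n m a k (fun _ => 0).
Proof. split; [apply NNS_zero|intros; lra]. Qed.

Lemma AGE_plus k c1 c2 :
  C_AGE n m a k c1 -> C_AGE n m a k c2 -> C_AGE n m a k (fun i => c1 i + c2 i).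
Proof.
  intros [A1 B1] [A2 B2]. split; [apply NNS_plus; auto|].
  intros i Hi Hk. specialize (B1 i Hi Hk); specialize (B2 i Hi Hk); lra.
Qed.

Lemma SAGE_NNS c : C_SAGE n m a c -> C_NNS n m a c.
Proof.
  intros [cs [H1 H2]] x.
  rewrite (Sig_ext c (fun i => fsum m (fun k => cs k i))) by auto.
  unfold Sig. rewrite (fsum_ext m _ (fun i => fsum m (fun k => cs k i * exp (dot n (a i) x))))
    by (intros; rewrite <- fsum_scalr; auto).
  rewrite fsum_swap. apply fsum_nonneg. intros k Hk. apply (H1 k Hk).
Qed.

Lemma SAGE_ext c c' : (forall i, (i < m)%nat -> c i = c' i) -> C_SAGE n m a c -> C_SAGE n m a c'.
Proof. intros H [cs [H1 H2]]. exists cs. split; auto. intros; rewrite <- H; auto. Qed.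

Lemma SAGE_zero : C_SAGE n m a (fun _ => 0).
Proof. exists (fun _ _ => 0). split; [intros; apply AGE_zero|]. intros; rewrite fsum_zero; auto. Qed.

Lemma SAGE_plus c1 c2 : C_SAGE n m a c1 -> C_SAGE n m a c2 -> C_SAGE n m a (fun i => c1 i + c2 i).
Proof.
  intros [cs1 [A1 B1]] [cs2 [A2 B2]]. exists (fun k i => cs1 k i + cs2 k i). split.
  - intros k Hk. apply AGE_plus; auto.
  - intros i Hi. rewrite fsum_plus, B1, B2; auto.
Qed.

Lemma AGE_SAGE k c : (k < m)%nat -> C_AGE n m a k c -> C_SAGE n m a c.
Proof.
  intros Hk H. exists (fun k' => if Nat.eq_dec k' k then c else fun _ => 0). split.
  - intros k' _. destruct Nat.eq_dec; [subst; auto|apply AGE_zero].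
  - intros i Hi. rewrite (fsum_single m _ k Hk).
    + destruct Nat.eq_dec; auto; lia.
    + intros k' _ Hne. destruct Nat.eq_dec; auto; lia.
Qed.

Lemma SAGE_fsum K (cl : nat -> nat -> R) : (forall l, (l < K)%nat -> C_SAGE n m a (cl l)) ->
  C_SAGE n m a (fun i => fsum K (fun l => cl l i)).
Proof.
  induction K; intros H; simpl.
  - apply SAGE_zero.
  - apply SAGE_plus; [apply IHK|apply H]; auto.
Qed.

Section Restriction.

Variables (c : nat -> R) (J : nat -> Prop) (v : nat -> R) (beta : R).
Hypothesis HJ : forall i, (i < m)%nat -> J i -> dot n (a i) v = beta.
Hypothesis HnJ : forall i, (i < m)%nat -> ~ J i -> c i = 0 \/ dot n (a i) v <= beta - 1.

Let absSig (x : nat -> R) : R := fsum m (fun i => Rabs (c i) * exp (dot n (a i) x)).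

Lemma Sig_shift_bound x t : 0 <= t ->
  Sig n m a c (fun j => x j + t * v j)
  <= exp (t * beta) * (Sig n m a (restrict J c) x + exp (- t) * absSig x).
Proof.
  intros Ht. unfold Sig, absSig. rewrite <- fsum_scal, <- fsum_plus, <- fsum_scal.
  apply fsum_le. intros i Hi. unfold restrict.
  rewrite (dot_ext_r n (a i) _ (fun j => 1 * x j + t * v j)) by (intros; ring).
  rewrite dot_lin_r, Rmult_1_l, exp_plus.
  pose proof (exp_pos (dot n (a i) x)). pose proof (exp_pos (- t)). pose proof (Rabs_pos (c i)).
  assert (Hb : 0 <= exp (t * beta)) by (apply Rlt_le, exp_pos).
  destruct (classic (J i)) as [HJi|HJi].
  - rewrite ind_T, HJ by auto. pose proof (exp_pos (t * beta)).
    assert (0 <= exp (t * beta) * (exp (- t) * (Rabs (c i) * exp (dot n (a i) x)))).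
    { apply Rmult_le_pos; auto. apply Rmult_le_pos; [lra|]. apply Rmult_le_pos; lra. }
    nra.
  - rewrite ind_F by auto. destruct (HnJ i Hi HJi) as [Hc|Hv].
    + rewrite Hc, Rabs_R0. lra.
    + assert (Hexp : exp (t * dot n (a i) v) <= exp (t * beta) * exp (- t)).
      { rewrite <- exp_plus. apply exp_le. nra. }
      apply Rle_trans with (Rabs (c i) * exp (dot n (a i) x) * exp (t * dot n (a i) v)).
      * rewrite (Rmult_assoc (Rabs (c i))). apply Rmult_le_compat_r; [|apply Rle_abs].
        apply Rmult_le_pos; apply Rlt_le, exp_pos.
      * replace (exp (t * beta) * (0 * c i * exp (dot n (a i) x)
          + exp (- t) * (Rabs (c i) * exp (dot n (a i) x))))
          with (Rabs (c i) * exp (dot n (a i) x) * (exp (t * beta) * exp (- t))) by ring.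
        apply Rmult_le_compat_l; [apply Rmult_le_pos; lra|auto].
Qed.

(* Pushing [x] far along [v] makes the exposed part of the signomial dominate. *)
Lemma NNS_restrict : C_NNS n m a c -> C_NNS n m a (restrict J c).
Proof.
  intros HN x. apply Rnot_lt_le. intros Hneg.
  set (eta := - Sig n m a (restrict J c) x).
  assert (Heta : 0 < eta) by (unfold eta; lra).
  assert (HM : 0 <= absSig x).
  { apply fsum_nonneg; intros. apply Rmult_le_pos; [apply Rabs_pos|apply Rlt_le, exp_pos]. }
  set (t := ln (absSig x / eta + 1)).
  assert (Hq : 0 <= absSig x / eta) by (apply Rmult_le_pos; [auto|apply Rlt_le, Rinv_0_lt_compat; lra]).
  assert (Ht : 0 <= t) by (unfold t; rewrite <- ln_1; apply ln_le; lra).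
  assert (Het : exp (- t) * absSig x = absSig x * eta / (absSig x + eta)).
  { unfold t. rewrite exp_Ropp, exp_ln by lra. field. split; [lra|]. unfold Rdiv in Hq. nra. }
  pose proof (Sig_shift_bound x t Ht) as Hb. rewrite Het in Hb.
  specialize (HN (fun j => x j + t * v j)). pose proof (exp_pos (t * beta)).
  assert (Sig n m a (restrict J c) x + absSig x * eta / (absSig x + eta) < 0).
  { replace (Sig n m a (restrict J c) x) with (- eta) by (unfold eta; ring).
    apply (Rmult_lt_reg_r (absSig x + eta)); [lra|]. field_simplify; nra. }
  nra.
Qed.

End Restriction.

End Cones.

(** * AGE vectors from the arithmetic–geometric mean inequality *)

Definition geo_mean (m : nat) (lam y : nat -> R) : R := exp (fsum m (fun i => lam i * ln (y i))).

Lemma geo_mean_pos m lam y : 0 < geo_mean m lam y.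
Proof. apply exp_pos. Qed.

(* The tangent line of [exp] at [M] lies below [exp]. *)
Lemma amgm m (lam Z : nat -> R) : (forall i, (i < m)%nat -> 0 <= lam i) -> fsum m lam = 1 ->
  (forall i, (i < m)%nat -> 0 < lam i -> 0 < Z i) ->
  geo_mean m lam Z <= fsum m (fun i => lam i * Z i).
Proof.
  intros H1 H2 H3. unfold geo_mean. set (M := fsum m (fun i => lam i * ln (Z i))).
  apply Rle_trans with (fsum m (fun i => lam i * (exp M * (1 + ln (Z i) - M)))).
  - rewrite (fsum_ext m _ (fun i => exp M * lam i + exp M * (lam i * ln (Z i)) - M * exp M * lam i))
      by (intros; ring).
    rewrite !fsum_minus, fsum_plus, !fsum_scal. fold M. rewrite H2. lra.
  - apply fsum_le. intros i Hi. destruct (H1 i Hi) as [Hp|Hz]; [|rewrite <- Hz; lra].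
    apply Rmult_le_compat_l; [lra|]. specialize (H3 i Hi Hp).
    pose proof (exp_ineq1_le (ln (Z i) - M)). rewrite <- (exp_ln (Z i)) at 2 by auto.
    replace (ln (Z i)) with (M + (ln (Z i) - M)) at 2 by ring. rewrite exp_plus.
    pose proof (exp_pos M). nra.
Qed.

Definition barycentric n m a (E : nat -> Prop) (lam : nat -> R) (p : nat) : Prop :=
  (forall i, (i < m)%nat -> 0 <= lam i) /\ (forall i, (i < m)%nat -> ~ E i -> lam i = 0) /\
  fsum m lam = 1 /\ (forall j, (j < n)%nat -> a p j = fsum m (fun i => lam i * a i j)).

Lemma barycentric_zero n m a E lam p i : barycentric n m a E lam p -> (i < m)%nat ->
  0 < lam i -> E i.
Proof. intros [_ [B2 _]] Hi Hl. apply NNPP. intros HE. rewrite B2 in Hl; auto. lra. Qed.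

Section AGEfromAMGM.

Variables (n m : nat) (a : nat -> nat -> R) (E : nat -> Prop) (lam : nat -> R) (p : nat).
Hypothesis Hbar : barycentric n m a E lam p.

Lemma geo_mean_exp (y : nat -> R) (s : R) z :
  (forall i, (i < m)%nat -> E i -> 0 < y i) -> 0 < s ->
  geo_mean m lam (fun i => s / y i * exp (dot n (a i) z))
  = s / geo_mean m lam y * exp (dot n (a p) z).
Proof.
  destruct Hbar as [B1 [B2 [B3 B4]]]. intros Hy Hs. unfold geo_mean.
  rewrite (fsum_ext m _ (fun i => lam i * ln s - lam i * ln (y i) + lam i * dot n (a i) z)).
  - rewrite fsum_plus, fsum_minus, fsum_scalr, B3, <- (dot_comb n m lam a (a p) z B4).
    rewrite Rmult_1_l. unfold Rminus. rewrite !exp_plus, exp_Ropp, exp_ln by auto.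
    unfold Rdiv. ring.
  - intros i Hi. destruct (classic (E i)) as [HE|HE]; [|rewrite B2; auto; ring].
    specialize (Hy i Hi HE). unfold Rdiv.
    rewrite ln_mult, ln_mult, ln_Rinv, ln_exp; try ring; try apply Rinv_0_lt_compat; auto;
      try apply exp_pos; apply Rmult_lt_0_compat; auto; apply Rinv_0_lt_compat; auto.
Qed.

Lemma geo_mean_exp_bound (y : nat -> R) (s : R) z :
  (forall i, (i < m)%nat -> E i -> 0 < y i) -> 0 < s ->
  s / geo_mean m lam y * exp (dot n (a p) z)
  <= fsum m (fun i => lam i * (s / y i * exp (dot n (a i) z))).
Proof.
  intros Hy Hs. rewrite <- geo_mean_exp by auto. pose proof Hbar as [B1 [_ [B3 _]]].
  apply amgm; auto. intros i Hi Hl. pose proof (barycentric_zero n m a E lam p i Hbar Hi Hl).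
  apply Rmult_lt_0_compat; [apply Rdiv_lt_0_compat; auto|apply exp_pos].
Qed.

Lemma AGE_of_geo_mean_bound (y : nat -> R) (s al : R) (u : nat -> R) :
  (p < m)%nat -> ~ E p -> (forall i, (i < m)%nat -> E i -> 0 < y i) -> 0 < s ->
  al * geo_mean m lam y <= s -> u p = - al ->
  (forall i, (i < m)%nat -> i <> p -> 0 <= u i /\ (E i -> lam i * s <= u i * y i)) ->
  C_AGE n m a p u.
Proof.
  intros Hp HEp Hy Hs Hal Hup Hu. split; [|intros i Hi Hne; apply Hu; auto].
  pose proof Hbar as [B1 [B2 _]]. intros z. unfold Sig.
  apply Rle_trans with (fsum m (fun i => lam i * (s / y i * exp (dot n (a i) z))
                                          + delta p i * (u p * exp (dot n (a p) z)))).
  - rewrite fsum_plus, fsum_delta by auto.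
    pose proof (geo_mean_exp_bound y s z Hy Hs). pose proof (geo_mean_pos m lam y).
    assert (al <= s / geo_mean m lam y).
    { apply (Rmult_le_reg_r (geo_mean m lam y)); auto. unfold Rdiv.
      rewrite Rmult_assoc, Rinv_l; lra. }
    pose proof (exp_pos (dot n (a p) z)). rewrite Hup. nra.
  - apply fsum_le. intros i Hi. unfold delta. destruct (Nat.eq_dec i p) as [->|Hne].
    + rewrite B2 by auto. lra.
    + rewrite Rmult_0_l, Rplus_0_r.
      destruct (Hu i Hi Hne) as [U1 U2]. pose proof (exp_pos (dot n (a i) z)).
      destruct (classic (E i)) as [HE|HE].
      * specialize (U2 HE). specialize (Hy i Hi HE).
        assert (lam i * (s / y i) <= u i)
          by (apply (Rmult_le_reg_r (y i)); auto; unfold Rdiv; field_simplify; lra).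
        nra.
      * rewrite B2; auto. nra.
Qed.

End AGEfromAMGM.

(** * Two negative coefficients *)

Lemma geo_mean_not_bounded m (P : nat -> Prop) (c lam : nat -> R) al i0 :
  0 < al -> (i0 < m)%nat -> 0 < lam i0 -> c i0 = 0 ->
  (forall i, (i < m)%nat -> P i -> 0 <= c i) ->
  ~ (forall y, (forall i, (i < m)%nat -> P i -> 0 < y i) ->
       al * geo_mean m lam y <= fsum m (fun i => ind (P i) * c i * y i)).
Proof.
  intros Hal Hi0 Hl Hc Hc0 H.
  set (S0 := fsum m (fun i => ind (P i) * c i)).
  assert (HS0 : 0 <= S0).
  { apply fsum_nonneg. intros i Hi. destruct (classic (P i)).
    - rewrite ind_T, Rmult_1_l; auto.
    - rewrite ind_F; auto; lra. }
  set (T := exp ((ln (S0 + 1) - ln al) / lam i0)).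
  set (y := fun i => if Nat.eq_dec i i0 then T else 1).
  assert (Hy : forall i, (i < m)%nat -> P i -> 0 < y i)
    by (intros; unfold y; destruct Nat.eq_dec; [apply exp_pos|lra]).
  specialize (H y Hy).
  assert (E1 : fsum m (fun i => ind (P i) * c i * y i) = S0).
  { apply fsum_ext. intros i Hi. unfold y. destruct Nat.eq_dec; [subst; rewrite Hc; ring|ring]. }
  assert (E2 : geo_mean m lam y = (S0 + 1) / al).
  { unfold geo_mean. rewrite (fsum_single m _ i0 Hi0).
    - unfold y. destruct Nat.eq_dec; [|lia]. unfold T. rewrite ln_exp.
      replace (lam i0 * ((ln (S0 + 1) - ln al) / lam i0)) with (ln (S0 + 1) + - ln al)
        by (field; lra).
      rewrite exp_plus, exp_Ropp, !exp_ln by lra. unfold Rdiv; ring.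
    - intros i Hi Hne. unfold y. destruct Nat.eq_dec; [lia|]. rewrite ln_1; ring. }
  rewrite E1, E2 in H. replace (al * ((S0 + 1) / al)) with (S0 + 1) in H by (field; lra). lra.
Qed.

(* The point at which [c i * y i >= lam i * s + mu i * r] holds with equality on [P]. *)
Definition tight_point (P : nat -> Prop) (c lam mu : nat -> R) (s r : R) : nat -> R :=
  fun i => if pdec (P i) then (lam i * s + mu i * r) / c i else 1.

Lemma exp_m1_lt : exp (-1) < 1/2.
Proof.
  assert (H : exp (-1) * exp 1 = 1)
    by (rewrite <- exp_plus; replace (-1 + 1) with 0 by ring; apply exp_0).
  pose proof (exp_ineq1 1 ltac:(lra)). pose proof (exp_pos (-1)). nra.
Qed.

(* Along the tight points, the coordinate [e0] stays bounded away from zero while the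
   others decay at most like [t]. *)
Lemma log_geo_mean_tight_lower m (P : nat -> Prop) (c lam mu : nat -> R) e0 :
  (forall i, (i < m)%nat -> 0 <= lam i) -> (forall i, (i < m)%nat -> 0 <= mu i) ->
  fsum m lam = 1 -> (forall i, (i < m)%nat -> 0 < lam i -> P i) ->
  (forall i, (i < m)%nat -> P i -> 0 < c i) -> (e0 < m)%nat -> 0 < mu e0 ->
  exists C, forall t, 0 < t <= 1/2 ->
    (1 - lam e0) * ln t + C <= fsum m (fun i => lam i * ln (tight_point P c lam mu t (1 - t) i)).
Proof.
  intros Hl Hm Hs HP Hc He0 Hm0.
  exists (fsum m (fun i => if Nat.eq_dec i e0 then lam e0 * ln (mu e0 / (2 * c e0))
                           else lam i * ln (lam i / c i))).
  intros t Ht.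
  replace ((1 - lam e0) * ln t) with (fsum m (fun i => ln t * lam i - ln t * (delta e0 i * lam e0)))
    by (rewrite fsum_minus, !fsum_scal, Hs, (fsum_delta m e0 (fun _ => lam e0)) by auto; ring).
  rewrite <- fsum_plus. apply fsum_le. intros i Hi. unfold tight_point, delta.
  destruct (Nat.eq_dec i e0) as [->|Hne].
  - destruct pdec as [HPe|HPe].
    + specialize (Hc e0 He0 HPe). pose proof (Hl e0 He0).
      replace (ln t * lam e0 - ln t * (1 * lam e0) + lam e0 * ln (mu e0 / (2 * c e0)))
        with (lam e0 * ln (mu e0 / (2 * c e0))) by ring.
      apply Rmult_le_compat_l; [lra|]. apply ln_le; [apply Rdiv_lt_0_compat; lra|].
      unfold Rdiv. rewrite Rinv_mult. apply (Rmult_le_reg_r (c e0)); [lra|].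
      field_simplify; try lra. nra.
    + destruct (Hl e0 He0) as [Hl0|Hl0]; [exfalso; apply HPe; apply HP; auto|].
      rewrite <- Hl0. lra.
  - destruct (Hl i Hi) as [Hli|Hli]; [|rewrite <- Hli; lra].
    destruct pdec as [HPi|HPi]; [|exfalso; apply HPi; apply HP; auto].
    specialize (Hc i Hi HPi). pose proof (Hm i Hi).
    replace (ln t * lam i - ln t * (0 * lam e0) + lam i * ln (lam i / c i))
      with (lam i * (ln t + ln (lam i / c i))) by ring.
    apply Rmult_le_compat_l; [lra|]. rewrite <- ln_mult; [|lra|apply Rdiv_lt_0_compat; lra].
    apply ln_le; [apply Rmult_lt_0_compat; [lra|apply Rdiv_lt_0_compat; lra]|].
    unfold Rdiv. apply (Rmult_le_reg_r (c i)); [lra|]. field_simplify; try lra. nra.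
Qed.

(* Hence near [t = 0] the geometric mean decays like [t ^ (1 - lam e0)], more slowly than [t]. *)
Lemma geo_mean_tight_near0 m (P : nat -> Prop) (c lam mu : nat -> R) al e0 :
  0 < al -> (forall i, (i < m)%nat -> 0 <= lam i) -> (forall i, (i < m)%nat -> 0 <= mu i) ->
  fsum m lam = 1 -> (forall i, (i < m)%nat -> 0 < lam i -> P i) ->
  (forall i, (i < m)%nat -> P i -> 0 < c i) -> (e0 < m)%nat -> 0 < lam e0 -> 0 < mu e0 ->
  exists t, 0 < t <= 1/2 /\ t < al * geo_mean m lam (tight_point P c lam mu t (1 - t)).
Proof.
  intros Hal Hl Hm Hs HP Hc He0 Hl0 Hm0.
  destruct (log_geo_mean_tight_lower m P c lam mu e0) as [C Hbound]; auto.
  assert (Hl0le : lam e0 <= 1) by (rewrite <- Hs; apply (fsum_ge_term m lam e0); auto).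
  set (t1 := exp (Rmin (-1) ((ln al + C) / lam e0 - 1))).
  assert (Ht1 : 0 < t1) by apply exp_pos.
  assert (Hlt1 : ln t1 <= -1 /\ ln t1 <= (ln al + C) / lam e0 - 1)
    by (unfold t1; rewrite ln_exp; split; [apply Rmin_l|apply Rmin_r]).
  assert (Ht1h : t1 <= 1/2).
  { pose proof exp_m1_lt. unfold t1. apply Rlt_le. eapply Rle_lt_trans; [apply exp_le, Rmin_l|].
    auto. }
  exists t1. split; [lra|].
  specialize (Hbound t1 ltac:(lra)).
  unfold geo_mean. rewrite <- (exp_ln al) at 1 by auto.
  rewrite <- exp_plus, <- (exp_ln t1) at 1 by auto. apply exp_increasing.
  assert (lam e0 * ln t1 < ln al + C).
  { apply Rle_lt_trans with (lam e0 * ((ln al + C) / lam e0 - 1));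
      [apply Rmult_le_compat_l; [lra|apply Hlt1]|].
    replace (lam e0 * ((ln al + C) / lam e0 - 1)) with (ln al + C - lam e0) by (field; lra). lra. }
  lra.
Qed.

Lemma continuity_pt_cst c x : continuity_pt (fun _ => c) x.
Proof. apply continuity_pt_const. intros u v; auto. Qed.

Lemma continuity_pt_id x : continuity_pt (fun t => t) x.
Proof. exact (derivable_continuous_pt id x (derivable_pt_id x)). Qed.

Lemma continuity_pt_exp f x : continuity_pt f x -> continuity_pt (fun t => exp (f t)) x.
Proof.
  intros H. exact (continuity_pt_comp f exp x H (derivable_continuous_pt exp _ (derivable_pt_exp _))).
Qed.

Lemma continuity_pt_ln f x : continuity_pt f x -> 0 < f x -> continuity_pt (fun t => ln (f t)) x.
Proof.
  intros H Hp. exact (continuity_pt_comp f ln x H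
    (derivable_continuous_pt ln _ (exist _ _ (derivable_pt_lim_ln _ Hp)))).
Qed.

Lemma continuity_pt_fsum m (f : nat -> R -> R) x :
  (forall i, (i < m)%nat -> continuity_pt (f i) x) ->
  continuity_pt (fun t => fsum m (fun i => f i t)) x.
Proof.
  induction m; intros H; simpl.
  - apply continuity_pt_cst.
  - apply continuity_pt_plus; [apply IHm; intros; apply H; lia|apply H; lia].
Qed.

Lemma exp_dot_barycentric n m a (E : nat -> Prop) lam p x s (y : nat -> R) :
  barycentric n m a E lam p ->
  (forall i, (i < m)%nat -> E i -> dot n (a i) x + s = ln (y i)) ->
  exp (dot n (a p) x) = geo_mean m lam y * exp (- s).
Proof.
  intros [B1 [B2 [B3 B4]]] H. rewrite (dot_comb n m lam a (a p) x B4).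
  rewrite (fsum_ext m _ (fun i => lam i * ln (y i) - s * lam i)).
  - rewrite fsum_minus, fsum_scal, B3. unfold geo_mean, Rminus. rewrite exp_plus. do 2 f_equal. ring.
  - intros i Hi. destruct (classic (E i)) as [HE|HE].
    + rewrite <- H by auto. ring.
    + rewrite B2 by auto. ring.
Qed.

Lemma geo_mean_homogeneous m lm (y y' : nat -> R) k : 0 < k ->
  (forall i, (i < m)%nat -> 0 <= lm i) -> fsum m lm = 1 ->
  (forall i, (i < m)%nat -> lm i <> 0 -> 0 < y i /\ y' i = k * y i) ->
  geo_mean m lm y' = k * geo_mean m lm y.
Proof.
  intros Hk H0 H1 H2. unfold geo_mean.
  rewrite (fsum_ext m _ (fun i => ln k * lm i + lm i * ln (y i))).
  - rewrite fsum_plus, fsum_scal, H1, Rmult_1_r, exp_plus, exp_ln; auto.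
  - intros i Hi. destruct (Req_dec (lm i) 0) as [->|Hne]; [ring|].
    destruct (H2 i Hi Hne) as [Hy ->]. rewrite ln_mult; auto; ring.
Qed.

Section TwoNegative.

Variables (n m : nat) (a : nat -> nat -> R) (E : nat -> Prop) (p q : nat) (lam mu c : nat -> R).
Hypothesis HA : aff_indep_cols n m a E.
Hypotheses (Hp : (p < m)%nat) (Hq : (q < m)%nat) (Hpq : p <> q) (HEp : ~ E p) (HEq : ~ E q).
Hypotheses (Bl : barycentric n m a E lam p) (Bm : barycentric n m a E mu q).
Hypothesis Hc0 : forall i, (i < m)%nat -> E i -> 0 <= c i.
Hypotheses (Hcp : c p < 0) (Hcq : c q < 0).
Hypothesis Hc1 : forall i, (i < m)%nat -> ~ E i -> i <> p -> i <> q -> c i = 0.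
Hypothesis HN : C_NNS n m a c.

(* Taking [exp (a_i . x + s) = y_i] on [E], nonnegativity of [Sig c] at [x] reads: *)
Lemma NNS_geo_mean_ineq y : (forall i, (i < m)%nat -> E i -> 0 < y i) ->
  - c p * geo_mean m lam y + - c q * geo_mean m mu y <= fsum m (fun i => ind (E i) * c i * y i).
Proof.
  intros Hy. destruct (aff_indep_solve n m a E HA (fun i => ln (y i))) as [x [s Hxs]].
  specialize (HN x). unfold Sig in HN.
  rewrite (fsum_ext m _ (fun i => exp (- s) * (ind (E i) * c i * y i)
      + delta p i * (exp (- s) * (c p * geo_mean m lam y))
      + delta q i * (exp (- s) * (c q * geo_mean m mu y)))) in HN.
  - rewrite !fsum_plus, fsum_scal, !fsum_delta in HN by auto.
    pose proof (exp_pos (- s)).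
    assert (0 <= fsum m (fun i => ind (E i) * c i * y i) + c p * geo_mean m lam y
                 + c q * geo_mean m mu y).
    { apply (Rmult_le_reg_l (exp (- s))); auto. lra. }
    lra.
  - intros i Hi. unfold delta. destruct (classic (E i)) as [HE|HE].
    + destruct Nat.eq_dec; [subst; tauto|]. destruct Nat.eq_dec; [subst; tauto|].
      rewrite ind_T by auto.
      replace (dot n (a i) x) with (ln (y i) + - s) by (rewrite <- Hxs by auto; ring).
      rewrite exp_plus, exp_ln by auto. ring.
    + rewrite ind_F by auto. destruct (Nat.eq_dec i p) as [->|Hip].
      * destruct Nat.eq_dec; [lia|]. rewrite (exp_dot_barycentric n m a E lam p x s y Bl Hxs). ring.
      * destruct (Nat.eq_dec i q) as [->|Hiq].
        -- rewrite (exp_dot_barycentric n m a E mu q x s y Bm Hxs). ring.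
        -- rewrite Hc1 by auto. ring.
Qed.

Definition active (i : nat) : Prop := E i /\ 0 < lam i + mu i.

Lemma not_active i : (i < m)%nat -> ~ active i -> lam i = 0 /\ mu i = 0.
Proof.
  pose proof Bl as [A1 [A2 _]]. pose proof Bm as [B1 [B2 _]]. intros Hi H. unfold active in H.
  destruct (classic (E i)) as [HE|HE].
  - assert (~ 0 < lam i + mu i) by tauto. specialize (A1 i Hi); specialize (B1 i Hi). split; lra.
  - split; [apply A2|apply B2]; auto.
Qed.

Lemma geo_mean_active lm y y' : (forall i, (i < m)%nat -> ~ active i -> lm i = 0) ->
  (forall i, (i < m)%nat -> active i -> y' i = y i) -> geo_mean m lm y' = geo_mean m lm y.
Proof.
  intros Hlm Hy. unfold geo_mean. f_equal. apply fsum_ext. intros i Hi.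
  destruct (classic (active i)); [rewrite Hy|rewrite Hlm]; auto; ring.
Qed.

(* The inactive columns of [E] can be given arbitrarily small values. *)
Lemma NNS_geo_mean_ineq_active y : (forall i, (i < m)%nat -> active i -> 0 < y i) ->
  - c p * geo_mean m lam y + - c q * geo_mean m mu y
  <= fsum m (fun i => ind (active i) * c i * y i).
Proof.
  intros Hy. apply Rnot_lt_le. intros Hlt.
  set (L := - c p * geo_mean m lam y + - c q * geo_mean m mu y) in *.
  set (Rr := fsum m (fun i => ind (active i) * c i * y i)) in *.
  set (B := fsum m (fun i => ind (E i /\ ~ active i) * c i)).
  assert (HB : 0 <= B).
  { apply fsum_nonneg. intros i Hi. destruct (classic (E i /\ ~ active i)) as [H|H].
    - rewrite ind_T, Rmult_1_l by exact H. apply Hc0; tauto.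
    - rewrite ind_F by auto. lra. }
  set (eps := (L - Rr) / (2 * (B + 1))).
  assert (Heps : 0 < eps) by (apply Rdiv_lt_0_compat; lra).
  set (y' := fun i => if pdec (active i) then y i else eps).
  assert (H1 : L <= fsum m (fun i => ind (E i) * c i * y' i)).
  { unfold L. rewrite <- (geo_mean_active lam y y'), <- (geo_mean_active mu y y').
    - apply NNS_geo_mean_ineq. intros i Hi HE. unfold y'. destruct pdec; auto.
    - intros i Hi Hn. apply (not_active i Hi Hn).
    - intros i Hi Hact. unfold y'. destruct pdec; tauto.
    - intros i Hi Hn. apply (not_active i Hi Hn).
    - intros i Hi Hact. unfold y'. destruct pdec; tauto. }
  assert (H2 : fsum m (fun i => ind (E i) * c i * y' i) = Rr + eps * B).
  { unfold Rr, B. rewrite <- fsum_scal, <- fsum_plus. apply fsum_ext. intros i Hi. unfold y'.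
    destruct (pdec (active i)) as [HR|HR].
    - rewrite (ind_T (E i)), (ind_T (active i)), ind_F by (try apply HR; tauto). ring.
    - rewrite (ind_F (active i)) by auto. destruct (classic (E i)) as [HE|HE].
      + rewrite ind_T, ind_T by tauto. ring.
      + rewrite ind_F, ind_F by tauto. ring. }
  assert (eps * B < L - Rr).
  { unfold eps. apply (Rmult_lt_reg_r (2 * (B + 1))); [lra|]. unfold Rdiv. field_simplify; nra. }
  lra.
Qed.

Lemma active_coef_pos i : (i < m)%nat -> active i -> 0 < c i.
Proof.
  intros Hi Hact. pose proof Hact as [HE Hlm].
  destruct (Hc0 i Hi HE) as [|Hz]; auto. exfalso.
  pose proof Bl as [L1 _]; pose proof Bm as [M1 _].
  pose proof (L1 i Hi); pose proof (M1 i Hi).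
  assert (Hc0' : forall i, (i < m)%nat -> active i -> 0 <= c i) by (intros i' Hi' [HE' _]; auto).
  pose proof (geo_mean_pos m lam) as Glam. pose proof (geo_mean_pos m mu) as Gmu.
  destruct (Rlt_dec 0 (lam i)).
  - apply (geo_mean_not_bounded m active c lam (- c p) i); auto; try lra.
    intros y Hy. specialize (NNS_geo_mean_ineq_active y Hy). specialize (Gmu y). nra.
  - apply (geo_mean_not_bounded m active c mu (- c q) i); auto; try lra.
    intros y Hy. specialize (NNS_geo_mean_ineq_active y Hy). specialize (Glam y). nra.
Qed.

Let Y (s r : R) : nat -> R := tight_point active c lam mu s r.

Lemma Y_pos_active s r : 0 < s -> 0 < r -> forall i, (i < m)%nat -> active i -> 0 < Y s r i.
Proof.
  intros Hs Hr i Hi Hact. unfold Y, tight_point. destruct pdec; [|tauto].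
  pose proof (active_coef_pos i Hi Hact). destruct Hact as [_ Hlm].
  pose proof Bl as [L1 _]; pose proof Bm as [M1 _]. pose proof (L1 i Hi); pose proof (M1 i Hi).
  apply Rdiv_lt_0_compat; [|lra].
  destruct (Rlt_dec 0 (lam i)); [|assert (0 < mu i) by lra]; nra.
Qed.

Lemma Y_pos s r : 0 < s -> 0 < r -> forall i, (i < m)%nat -> E i -> 0 < Y s r i.
Proof.
  intros Hs Hr i Hi HE. destruct (classic (active i)) as [Hact|Hact]; [apply Y_pos_active; auto|].
  unfold Y, tight_point. destruct pdec; [tauto|lra].
Qed.

Lemma Y_dominates s r i : (i < m)%nat -> E i -> lam i * s + mu i * r <= c i * Y s r i.
Proof.
  intros Hi HE. unfold Y, tight_point. destruct pdec as [Hact|Hact].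
  - pose proof (active_coef_pos i Hi Hact). right. field. lra.
  - destruct (not_active i Hi Hact) as [-> ->]. specialize (Hc0 i Hi HE). lra.
Qed.

Lemma Y_geo_mean_sum s r : 0 < s -> 0 < r ->
  - c p * geo_mean m lam (Y s r) + - c q * geo_mean m mu (Y s r) <= s + r.
Proof.
  intros Hs Hr. eapply Rle_trans; [apply NNS_geo_mean_ineq_active, Y_pos_active; auto|].
  right. pose proof Bl as [_ [_ [L3 _]]]; pose proof Bm as [_ [_ [M3 _]]].
  rewrite (fsum_ext m _ (fun i => s * lam i + r * mu i)).
  - rewrite fsum_plus, !fsum_scal, L3, M3. ring.
  - intros i Hi. unfold Y, tight_point. destruct (pdec (active i)) as [Hact|Hact].
    + rewrite ind_T by auto. pose proof (active_coef_pos i Hi Hact). field. lra.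
    + rewrite ind_F by auto. destruct (not_active i Hi Hact) as [-> ->]. ring.
Qed.

Lemma geo_mean_Y_continuous lm x : 0 < x < 1 ->
  continuity_pt (fun t => geo_mean m lm (Y t (1 - t))) x.
Proof.
  intros Hx. unfold geo_mean. apply continuity_pt_exp, continuity_pt_fsum. intros i Hi.
  unfold Y, tight_point. destruct (pdec (active i)) as [Hact|Hact]; [|apply continuity_pt_cst].
  apply continuity_pt_mult; [apply continuity_pt_cst|]. apply continuity_pt_ln.
  - unfold Rdiv. apply continuity_pt_mult; [|apply continuity_pt_cst].
    apply continuity_pt_plus; apply continuity_pt_mult; try apply continuity_pt_cst.
    + apply continuity_pt_id.
    + apply continuity_pt_minus; [apply continuity_pt_cst|apply continuity_pt_id].
  - pose proof (Y_pos_active x (1 - x) ltac:(lra) ltac:(lra) i Hi Hact) as HY.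
    unfold Y, tight_point in HY. destruct pdec; [auto|tauto].
Qed.

Lemma active_of_pos i : (i < m)%nat -> 0 < lam i \/ 0 < mu i -> active i.
Proof.
  intros Hi Hpos. pose proof Bl as [L1 _]; pose proof Bm as [M1 _].
  pose proof (L1 i Hi); pose proof (M1 i Hi).
  destruct Hpos as [Hl|Hm]; split; try lra.
  - apply (barycentric_zero n m a E lam p i Bl Hi Hl).
  - apply (barycentric_zero n m a E mu q i Bm Hi Hm).
Qed.

(* When [lam] and [mu] share a column, the two defects [phi] and [psi] below, whose sum is
   nonpositive, are positive near [t = 0] resp. [t = 1]; they cross in between. *)
Lemma balanced_coupled : (exists e0, (e0 < m)%nat /\ 0 < lam e0 /\ 0 < mu e0) ->
  exists t, 0 < t < 1 /\ - c p * geo_mean m lam (Y t (1 - t)) <= t /\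
            - c q * geo_mean m mu (Y t (1 - t)) <= 1 - t.
Proof.
  intros [e0 [He0 [Hle0 Hme0]]].
  pose proof Bl as [L1 [_ [L3 _]]]; pose proof Bm as [M1 [_ [M3 _]]].
  assert (Hcpos : forall i, (i < m)%nat -> active i -> 0 < c i) by apply active_coef_pos.
  destruct (geo_mean_tight_near0 m active c lam mu (- c p) e0) as [t1 [Ht1 Hphi1]]; auto; try lra.
  { intros i Hi Hl. apply active_of_pos; auto. }
  destruct (geo_mean_tight_near0 m active c mu lam (- c q) e0) as [s1 [Hs1 Hpsi1]]; auto; try lra.
  { intros i Hi Hl. apply active_of_pos; auto. }
  set (t2 := 1 - s1).
  set (phi := fun t => - c p * geo_mean m lam (Y t (1 - t)) - t).
  set (psi := fun t => - c q * geo_mean m mu (Y t (1 - t)) - (1 - t)).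
  assert (Hsum : forall t, 0 < t < 1 -> phi t + psi t <= 0).
  { intros t Ht. pose proof (Y_geo_mean_sum t (1 - t) ltac:(lra) ltac:(lra)). unfold phi, psi. lra. }
  assert (Hp1 : 0 < phi t1) by (unfold phi, Y; lra).
  assert (Hq2 : 0 < psi t2).
  { unfold psi. replace (geo_mean m mu (Y t2 (1 - t2)))
      with (geo_mean m mu (tight_point active c mu lam s1 (1 - s1))); [unfold t2; lra|].
    unfold geo_mean. f_equal. apply fsum_ext. intros i Hi. unfold Y, tight_point, t2.
    destruct pdec; [|auto]. do 3 f_equal. ring. }
  assert (Hlt : t1 < t2).
  { destruct (Req_dec t1 t2) as [e|ne]; [|unfold t2 in *; lra].
    exfalso. rewrite e in Hp1. specialize (Hsum t2 ltac:(unfold t2; lra)). lra. }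
  assert (Hcont : forall x, t1 <= x <= t2 -> continuity_pt (fun t => psi t - phi t) x).
  { intros x Hx. assert (0 < x < 1) by (unfold t2 in *; lra). unfold psi, phi.
    repeat apply continuity_pt_minus; try apply continuity_pt_mult;
      auto using continuity_pt_cst, continuity_pt_id, geo_mean_Y_continuous. }
  assert (Hf1 : psi t1 - phi t1 < 0) by (specialize (Hsum t1 ltac:(lra)); lra).
  assert (Hf2 : 0 < psi t2 - phi t2) by (specialize (Hsum t2 ltac:(unfold t2 in *; lra)); lra).
  destruct (Ranalysis5.IVT_interv (fun t => psi t - phi t) t1 t2 Hcont Hlt Hf1 Hf2)
    as [z [Hz1 Hz2]].
  assert (Hz : 0 < z < 1) by (unfold t2 in *; lra).
  specialize (Hsum z Hz). exists z. unfold phi, psi in *. repeat split; lra.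
Qed.

(* With disjoint supports each geometric mean depends on one of [s], [r] only, linearly. *)
Lemma balanced_decoupled : (forall i, (i < m)%nat -> lam i = 0 \/ mu i = 0) ->
  - c p * geo_mean m lam (Y 1 1) <= 1 /\ - c q * geo_mean m mu (Y 1 1) <= 1.
Proof.
  intros Hd. pose proof Bl as [L1 [_ [L3 _]]]; pose proof Bm as [M1 [_ [M3 _]]].
  assert (E1 : forall s r, 0 < s -> 0 < r -> geo_mean m lam (Y s r) = s * geo_mean m lam (Y 1 1)).
  { intros s r Hs Hr. apply geo_mean_homogeneous; auto. intros i Hi Hne.
    destruct (Hd i Hi) as [|Hmi]; [tauto|].
    assert (Hact : active i) by (apply active_of_pos; auto; pose proof (L1 i Hi); lra).
    split; [apply Y_pos_active; auto; lra|].
    unfold Y, tight_point. destruct pdec; [|tauto]. rewrite Hmi.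
    pose proof (active_coef_pos i Hi Hact). field. lra. }
  assert (E2 : forall s r, 0 < s -> 0 < r -> geo_mean m mu (Y s r) = r * geo_mean m mu (Y 1 1)).
  { intros s r Hs Hr. apply geo_mean_homogeneous; auto. intros i Hi Hne.
    destruct (Hd i Hi) as [Hli|]; [|tauto].
    assert (Hact : active i) by (apply active_of_pos; auto; pose proof (M1 i Hi); lra).
    split; [apply Y_pos_active; auto; lra|].
    unfold Y, tight_point. destruct pdec; [|tauto]. rewrite Hli.
    pose proof (active_coef_pos i Hi Hact). field. lra. }
  set (g1 := - c p * geo_mean m lam (Y 1 1)). set (g2 := - c q * geo_mean m mu (Y 1 1)).
  assert (Hg1 : 0 <= g1) by (unfold g1; pose proof (geo_mean_pos m lam (Y 1 1)); nra).
  assert (Hg2 : 0 <= g2) by (unfold g2; pose proof (geo_mean_pos m mu (Y 1 1)); nra).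
  assert (Hineq : forall s r, 0 < s -> 0 < r -> s * g1 + r * g2 <= s + r).
  { intros s r Hs Hr. pose proof (Y_geo_mean_sum s r Hs Hr) as H.
    rewrite E1, E2 in H by auto. unfold g1, g2. lra. }
  split; apply Rnot_lt_le; intros Hg.
  - specialize (Hineq 1 ((g1 - 1) / 2) ltac:(lra) ltac:(apply Rdiv_lt_0_compat; lra)).
    assert (0 <= (g1 - 1) / 2 * g2) by (apply Rmult_le_pos; auto; apply Rlt_le, Rdiv_lt_0_compat; lra).
    lra.
  - specialize (Hineq ((g2 - 1) / 2) 1 ltac:(apply Rdiv_lt_0_compat; lra) ltac:(lra)).
    assert (0 <= (g2 - 1) / 2 * g1) by (apply Rmult_le_pos; auto; apply Rlt_le, Rdiv_lt_0_compat; lra).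
    lra.
Qed.

Lemma balanced_weights : exists y s r, 0 < s /\ 0 < r /\
  (forall i, (i < m)%nat -> E i -> 0 < y i) /\
  (forall i, (i < m)%nat -> E i -> lam i * s + mu i * r <= c i * y i) /\
  - c p * geo_mean m lam y <= s /\ - c q * geo_mean m mu y <= r.
Proof.
  destruct (classic (exists e0, (e0 < m)%nat /\ 0 < lam e0 /\ 0 < mu e0)) as [Hc|Hd].
  - destruct (balanced_coupled Hc) as [t [Ht [H1 H2]]].
    exists (Y t (1 - t)), t, (1 - t). repeat split; try lra.
    + apply Y_pos; lra.
    + apply Y_dominates.
  - destruct balanced_decoupled as [H1 H2].
    { intros i Hi. pose proof Bl as [L1 _]; pose proof Bm as [M1 _].
      destruct (L1 i Hi) as [h1|h1]; [|auto]. destruct (M1 i Hi) as [h2|h2]; [|auto].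
      exfalso; apply Hd; eauto. }
    exists (Y 1 1), 1, 1. repeat split; try lra.
    + apply Y_pos; lra.
    + apply Y_dominates.
Qed.

(* Split the positive coefficients as [mu r / y] for the AGE vector at [q] and the rest for
   the AGE vector at [p]. *)
Lemma two_negative_SAGE : C_SAGE n m a c.
Proof.
  destruct balanced_weights as [y [s [r [Hs [Hr [Hy [Hyc [Hgs Hgr]]]]]]]].
  pose proof Bl as [L1 [L2 _]]. pose proof Bm as [M1 [M2 _]].
  set (w := fun i => if Nat.eq_dec i q then c q else mu i * r / y i).
  set (u := fun i => if Nat.eq_dec i q then 0 else c i - mu i * r / y i).
  apply (SAGE_ext n m a (fun i => u i + w i)).
  { intros i Hi. unfold u, w. destruct Nat.eq_dec; subst; ring. }
  apply SAGE_plus; [apply (AGE_SAGE n m a p)|apply (AGE_SAGE n m a q)]; auto.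
  - apply (AGE_of_geo_mean_bound n m a E lam p Bl y s (- c p) u Hp HEp Hy Hs Hgs).
    + unfold u. destruct Nat.eq_dec; [lia|]. rewrite M2 by auto. unfold Rdiv; ring.
    + intros i Hi Hne. unfold u. destruct (Nat.eq_dec i q) as [->|Hiq]; [split; [lra|tauto]|].
      destruct (classic (E i)) as [HE|HE].
      * specialize (Hy i Hi HE). specialize (Hyc i Hi HE). pose proof (L1 i Hi).
        assert (Heq : (c i - mu i * r / y i) * y i = c i * y i - mu i * r) by (field; lra).
        split; [|intros; rewrite Heq; lra].
        apply (Rmult_le_reg_r (y i)); auto. rewrite Heq. nra.
      * rewrite Hc1, M2 by auto. split; [unfold Rdiv; lra|tauto].
  - apply (AGE_of_geo_mean_bound n m a E mu q Bm y r (- c q) w Hq HEq Hy Hr Hgr).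
    + unfold w. destruct Nat.eq_dec; [ring|lia].
    + intros i Hi Hne. unfold w. destruct Nat.eq_dec; [lia|].
      destruct (classic (E i)) as [HE|HE].
      * specialize (Hy i Hi HE). pose proof (M1 i Hi). split.
        -- unfold Rdiv. apply Rmult_le_pos; [nra|apply Rlt_le, Rinv_0_lt_compat; lra].
        -- intros _. right. field. lra.
      * rewrite M2 by auto. split; [unfold Rdiv; lra|tauto].
Qed.

End TwoNegative.

(** * Blocks *)

Lemma weights_concentrated m (w : nat -> R) p : (forall i, (i < m)%nat -> 0 <= w i) ->
  fsum m w = 1 -> (p < m)%nat -> w p = 1 -> forall i, (i < m)%nat -> i <> p -> w i = 0.
Proof.
  intros H1 H2 Hp Hw. set (nu := fun i => if Nat.eq_dec i p then 0 else w i).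
  assert (Hs : fsum m nu = 0).
  { rewrite (fsum_ext m w (fun i => nu i + delta p i * w p)) in H2
      by (intros; unfold nu, delta; destruct Nat.eq_dec; subst; ring).
    rewrite fsum_plus, (fsum_delta m p (fun _ => w p)) in H2 by auto. lra. }
  intros i Hi Hne.
  pose proof (fsum_nonneg_zero m nu ltac:(intros; unfold nu; destruct Nat.eq_dec; [lra|auto]) Hs i Hi)
    as Hz.
  unfold nu in Hz. destruct Nat.eq_dec; [lia|auto].
Qed.

Section Block.

Variables (n m : nat) (a : nat -> nat -> R) (blk : nat -> nat) (l : nat).
Hypothesis Hdist : forall i i', (i < m)%nat -> (i' < m)%nat -> i <> i' -> ~ eqv n (a i) (a i').

Let J := fun i => blk i = l.

Lemma extreme_singleton_face i : (i < m)%nat -> extreme_col n m a blk l i ->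
  is_face n (conv_cols n m a (fun k => k = i)) (New_blk n m a blk l).
Proof.
  intros Hi [Hb [_ Hext]].
  assert (Hpt : forall p, conv_cols n m a (fun k => k = i) p -> forall j, (j < n)%nat -> p j = a i j)
    by (intros; apply (conv_single n m a i); auto).
  assert (Hai : forall p, (forall j, (j < n)%nat -> p j = a i j) -> conv_cols n m a (fun k => k = i) p)
    by (intros p Hp; apply (conv_ext n m a _ (a i)); [apply conv_self; auto|intros; rewrite Hp; auto]).
  split; [|split].
  - intros p Hp. apply (conv_ext n m a _ (a i)); [apply conv_self; auto|].
    intros j Hj. symmetry; apply Hpt; auto.
  - intros x y t Hx Hy Ht p Hp. apply Hai. intros j Hj. rewrite Hp, Hpt, (Hpt y) by auto. ring.
  - intros x y p Hx Hy [t [Ht Hp]] Fp.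
    assert (Hseg : in_open_seg n x y (a i))
      by (exists t; split; auto; intros j Hj; rewrite <- (Hpt p Fp j Hj); auto).
    specialize (Hext x y Hx Hy Hseg).
    assert (Hxa : forall j, (j < n)%nat -> x j = a i j).
    { intros j Hj. rewrite <- (Hpt p Fp j Hj), Hp, (Hext j Hj) by auto. ring. }
    split; apply Hai; intros j Hj; [|rewrite <- Hext]; auto.
Qed.

(* The coefficient of an extreme column is nonnegative: it is the whole signomial
   restricted to the face that this column exposes. *)
Lemma extreme_coef_nonneg c i : (i < m)%nat -> extreme_col n m a blk l i -> C_NNS n m a c ->
  (forall k, (k < m)%nat -> ~ J k -> c k = 0) -> 0 <= c i.
Proof.
  intros Hi Hx HN Hout. pose proof Hx as [Hb _].
  destruct (face_exposed n m a J (fun k => k = i)) as [v [beta [V1 V2]]].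
  - intros k ->; auto.
  - exists i; split; auto.
  - apply extreme_singleton_face; auto.
  - intros k Hk _ Hne Hc. apply (Hdist k i Hk Hi Hne). intros j Hj.
    apply (conv_single n m a i (a k) Hi Hc j Hj).
  - assert (H : C_NNS n m a (restrict (fun k => k = i) c)).
    { apply (NNS_restrict n m a c _ v beta); auto. intros k Hk Hne.
      destruct (classic (J k)); [right; apply V2|left; apply Hout]; auto. }
    specialize (H (fun _ => 0)). unfold Sig, restrict in H. rewrite (fsum_single m _ i Hi) in H.
    + rewrite ind_T in H by auto. pose proof (exp_pos (dot n (a i) (fun _ => 0))). nra.
    + intros k Hk Hne. rewrite ind_F by auto. ring.
Qed.

Lemma nonextreme_col_comb p : nonextreme_col n m a blk l p ->
  exists xi, (forall i, (i < m)%nat -> 0 <= xi i) /\ (forall i, (i < m)%nat -> ~ J i -> xi i = 0) /\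
    fsum m xi = 1 /\ (forall j, (j < n)%nat -> a p j = fsum m (fun i => xi i * a i j)) /\ xi p < 1.
Proof.
  intros [Hp [Hb Hne]].
  destruct (classic (exists x y, New_blk n m a blk l x /\ New_blk n m a blk l y /\
                                 in_open_seg n x y (a p) /\ ~ eqv n x y))
    as [[x [y [Cx [Cy [[t [Ht Hseg]] Hxy]]]]]|Hno].
  2: { exfalso. apply Hne. split; [apply conv_self; auto|]. intros x y Cx Cy Hs.
       apply NNPP. intros Hn. apply Hno. exists x, y; auto. }
  destruct Cx as [lx [X1 [X2 [X3 X4]]]]. destruct Cy as [ly [Y1 [Y2 [Y3 Y4]]]].
  exists (fun i => t * lx i + (1 - t) * ly i). repeat split.
  - intros i Hi. specialize (X1 i Hi); specialize (Y1 i Hi). nra.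
  - intros i Hi Hbi. rewrite X2, Y2; auto; ring.
  - rewrite fsum_plus, !fsum_scal, X3, Y3. ring.
  - intros j Hj. rewrite Hseg, X4, Y4 by auto. rewrite <- !fsum_scal, <- fsum_plus.
    apply fsum_ext; intros; ring.
  - apply Rnot_le_lt. intros Hge.
    assert (Hlx : lx p <= 1) by (rewrite <- X3; apply fsum_ge_term; auto).
    assert (Hly : ly p <= 1) by (rewrite <- Y3; apply fsum_ge_term; auto).
    assert (Ex : lx p = 1) by nra. assert (Ey : ly p = 1) by nra.
    apply Hxy. intros j Hj.
    rewrite X4, Y4 by auto.
    rewrite (fsum_single m _ p Hp), (fsum_single m (fun i => ly i * a i j) p Hp).
    + rewrite Ex, Ey; ring.
    + intros i Hi Hne'. rewrite (weights_concentrated m ly p Y1 Y3 Hp Ey i Hi Hne'); ring.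
    + intros i Hi Hne'. rewrite (weights_concentrated m lx p X1 X3 Hp Ex i Hi Hne'); ring.
Qed.

End Block.

Lemma SAGE_at_most_one_negative n m a c : C_NNS n m a c ->
  (forall i i', (i < m)%nat -> (i' < m)%nat -> c i < 0 -> c i' < 0 -> i = i') -> C_SAGE n m a c.
Proof.
  intros HN Hone. destruct (classic (exists i1, (i1 < m)%nat /\ c i1 < 0)) as [[i1 [Hi1 Hn1]]|Hall].
  - apply (AGE_SAGE n m a i1); auto. split; auto. intros i Hi Hne. apply Rnot_lt_le. intros Hc.
    apply Hne, (Hone i i1); auto.
  - destruct m as [|m'].
    + exists (fun _ _ => 0). split; intros; lia.
    + apply (AGE_SAGE n (S m') a 0); [lia|]. split; auto. intros i Hi _. apply Rnot_lt_le.
      intros Hc. apply Hall; eauto.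
Qed.

Section PairOfNonextreme.

Variables (n m : nat) (a : nat -> nat -> R) (E : nat -> Prop) (p q : nat) (xi eta : nat -> R).
Hypotheses (X1 : forall i, (i < m)%nat -> 0 <= xi i) (Y1 : forall i, (i < m)%nat -> 0 <= eta i).
Hypothesis Hs1 : 1 = xi p + xi q + fsum m (fun i => ind (E i) * xi i).
Hypothesis Hs2 : 1 = eta p + eta q + fsum m (fun i => ind (E i) * eta i).
Hypothesis He1 : forall j, (j < n)%nat ->
  a p j = xi p * a p j + xi q * a q j + fsum m (fun i => ind (E i) * xi i * a i j).
Hypothesis He2 : forall j, (j < n)%nat ->
  a q j = eta p * a p j + eta q * a q j + fsum m (fun i => ind (E i) * eta i * a i j).

(* Solving the 2x2 system [He1], [He2] for the columns [p] and [q]. *)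
Lemma barycentric_of_pair (Hp : (p < m)%nat) (Hq : (q < m)%nat) :
  0 < (1 - xi p) * (1 - eta q) - xi q * eta p ->
  barycentric n m a E (fun i => ind (E i) * ((1 - eta q) * xi i + xi q * eta i)
                               / ((1 - xi p) * (1 - eta q) - xi q * eta p)) p.
Proof.
  intros HD. set (D := (1 - xi p) * (1 - eta q) - xi q * eta p) in *.
  pose proof (X1 p Hp); pose proof (X1 q Hq); pose proof (Y1 p Hp); pose proof (Y1 q Hq).
  assert (Heq1 : eta q <= 1).
  { assert (0 <= fsum m (fun i => ind (E i) * eta i)); [|lra].
    apply fsum_nonneg. intros i Hi. apply Rmult_le_pos; [apply ind_ge0|auto]. }
  repeat split.
  - intros i Hi. pose proof (X1 i Hi); pose proof (Y1 i Hi). unfold Rdiv.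
    apply Rmult_le_pos; [|apply Rlt_le, Rinv_0_lt_compat; auto].
    pose proof (ind_ge0 (E i)). apply Rmult_le_pos; nra.
  - intros i Hi HE. rewrite ind_F by auto. unfold Rdiv; ring.
  - unfold Rdiv. rewrite fsum_scalr.
    rewrite (fsum_ext m _ (fun i => (1 - eta q) * (ind (E i) * xi i) + xi q * (ind (E i) * eta i)))
      by (intros; ring).
    rewrite fsum_plus, !fsum_scal. apply (Rmult_eq_reg_r D); [|lra].
    rewrite Rmult_assoc, Rinv_l by lra. unfold D. nra.
  - intros j Hj. unfold Rdiv.
    rewrite (fsum_ext m _ (fun i => / D * ((1 - eta q) * (ind (E i) * xi i * a i j)
                                          + xi q * (ind (E i) * eta i * a i j)))) by (intros; ring).
    rewrite fsum_scal, fsum_plus, !fsum_scal.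
    apply (Rmult_eq_reg_l D); [|lra]. rewrite <- Rmult_assoc, Rinv_r, Rmult_1_l by lra.
    specialize (He1 j Hj); specialize (He2 j Hj). unfold D. nra.
Qed.

Lemma pair_det_pos (Hp : (p < m)%nat) (Hq : (q < m)%nat) : ~ eqv n (a p) (a q) ->
  xi p < 1 -> eta q < 1 -> 0 < (1 - xi p) * (1 - eta q) - xi q * eta p.
Proof.
  intros Hpq Hxp Heq.
  assert (Hnn : forall w, (forall i, (i < m)%nat -> 0 <= w i) ->
                 forall i, (i < m)%nat -> 0 <= ind (E i) * w i)
    by (intros w Hw i Hi; apply Rmult_le_pos; [apply ind_ge0|auto]).
  pose proof (fsum_nonneg m _ (Hnn xi X1)). pose proof (fsum_nonneg m _ (Hnn eta Y1)).
  pose proof (X1 p Hp); pose proof (X1 q Hq); pose proof (Y1 p Hp); pose proof (Y1 q Hq).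
  apply Rnot_le_lt. intros HD.
  assert (Hs10 : fsum m (fun i => ind (E i) * xi i) = 0).
  { apply NNPP. intros Hne. destruct (Rle_lt_dec (eta p) 0); nra. }
  apply Hpq. intros j Hj. specialize (He1 j Hj).
  rewrite fsum_zero in He1.
  - apply (Rmult_eq_reg_l (1 - xi p)); [|lra]. replace (xi q) with (1 - xi p) in He1 by lra. lra.
  - intros i Hi. rewrite (fsum_nonneg_zero m _ (Hnn xi X1) Hs10 i Hi). ring.
Qed.

End PairOfNonextreme.

Lemma fsum_split_pair m (Bk E : nat -> Prop) p q (xi f : nat -> R) :
  (p < m)%nat -> (q < m)%nat -> p <> q -> ~ E p -> ~ E q ->
  (forall i, (i < m)%nat -> Bk i -> ~ E i -> i = p \/ i = q) ->
  (forall i, (i < m)%nat -> ~ Bk i -> xi i = 0) ->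
  fsum m (fun i => xi i * f i) = xi p * f p + xi q * f q + fsum m (fun i => ind (E i) * xi i * f i).
Proof.
  intros Hp Hq Hpq HEp HEq HB Hz.
  rewrite (fsum_ext m _ (fun i => delta p i * (xi p * f p) + delta q i * (xi q * f q)
                                  + ind (E i) * xi i * f i)).
  - rewrite !fsum_plus, !fsum_delta by auto. auto.
  - intros i Hi. unfold delta. destruct (Nat.eq_dec i p) as [->|Hip].
    + destruct Nat.eq_dec; [lia|]. rewrite ind_F by auto. ring.
    + destruct (Nat.eq_dec i q) as [->|Hiq]; [rewrite ind_F by auto; ring|].
      destruct (classic (E i)) as [HE|HE]; [rewrite ind_T by auto; ring|].
      rewrite ind_F by auto. destruct (classic (Bk i)) as [HBi|HBi].
      * destruct (HB i Hi HBi HE); lia.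
      * rewrite Hz by auto. ring.
Qed.

Lemma two_nonextreme_barycentric n m a blk l (E : nat -> Prop) p q :
  nonextreme_col n m a blk l p -> nonextreme_col n m a blk l q -> p <> q ->
  ~ eqv n (a p) (a q) -> ~ E p -> ~ E q ->
  (forall i, (i < m)%nat -> blk i = l -> ~ E i -> i = p \/ i = q) ->
  exists lam mu, barycentric n m a E lam p /\ barycentric n m a E mu q.
Proof.
  intros Np Nq Hpq Hdpq HEp HEq HB. pose proof Np as [Hp _]. pose proof Nq as [Hq _].
  destruct (nonextreme_col_comb n m a blk l p Np) as [xi [X1 [X2 [X3 [X4 X5]]]]].
  destruct (nonextreme_col_comb n m a blk l q Nq) as [eta [Y1 [Y2 [Y3 [Y4 Y5]]]]].
  assert (Hs : forall w, (forall i, (i < m)%nat -> blk i <> l -> w i = 0) -> fsum m w = 1 ->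
            1 = w p + w q + fsum m (fun i => ind (E i) * w i)).
  { intros w Hw Hw1. rewrite <- Hw1, (fsum_ext m w (fun i => w i * 1)) by (intros; ring).
    rewrite (fsum_split_pair m (fun i => blk i = l) E p q w (fun _ => 1)); auto.
    rewrite (fsum_ext m (fun i => ind (E i) * w i * 1) (fun i => ind (E i) * w i)) by (intros; ring).
    ring. }
  assert (He : forall w, (forall i, (i < m)%nat -> blk i <> l -> w i = 0) -> forall k,
            (forall j, (j < n)%nat -> a k j = fsum m (fun i => w i * a i j)) ->
            forall j, (j < n)%nat -> a k j = w p * a p j + w q * a q j
                                             + fsum m (fun i => ind (E i) * w i * a i j)).
  { intros w Hw k Hk j Hj. rewrite Hk at 1 by auto.
    apply (fsum_split_pair m (fun i => blk i = l) E p q w (fun i => a i j)); auto. }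
  pose proof (pair_det_pos n m a E p q xi eta X1 Y1 (Hs xi X2 X3) (Hs eta Y2 Y3)
                (He xi X2 p X4) Hp Hq Hdpq X5 Y5) as HD.
  eexists; eexists; split.
  - apply (barycentric_of_pair n m a E p q xi eta X1 Y1 (Hs xi X2 X3) (Hs eta Y2 Y3)
             (He xi X2 p X4) (He eta Y2 q Y4) Hp Hq HD).
  - apply (barycentric_of_pair n m a E q p eta xi Y1 X1); auto.
    + rewrite (Hs eta Y2 Y3) at 1. ring.
    + rewrite (Hs xi X2 X3) at 1. ring.
    + intros j Hj. rewrite (He eta Y2 q Y4 j Hj) at 1. ring.
    + intros j Hj. rewrite (He xi X2 p X4 j Hj) at 1. ring.
    + lra.
Qed.

Section Decomposition.

Variables (n m : nat) (a : nat -> nat -> R) (K : nat) (blk : nat -> nat).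
Hypothesis Hdist : forall i i', (i < m)%nat -> (i' < m)%nat -> i <> i' -> ~ eqv n (a i) (a i').
Hypothesis Hblk : forall i, (i < m)%nat -> (blk i < K)%nat.
Hypothesis Hface : forall l, (l < K)%nat -> is_face n (New_blk n m a blk l) (New n m a).
Hypothesis Hdisj : forall l l' p, (l < K)%nat -> (l' < K)%nat -> l <> l' ->
  New_blk n m a blk l p -> New_blk n m a blk l' p -> False.

Lemma block_NNS c l : (l < K)%nat -> C_NNS n m a c -> C_NNS n m a (restrict (fun i => blk i = l) c).
Proof.
  intros Hl HN. destruct (classic (exists i0, (i0 < m)%nat /\ blk i0 = l)) as [Hex|Hno].
  - destruct (face_exposed n m a (fun _ => True) (fun i => blk i = l)) as [v [beta [V1 V2]]].
    + intros; exact I.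
    + exact Hex.
    + exact (Hface l Hl).
    + intros i Hi _ Hne Hc. apply (Hdisj l (blk i) (a i)); auto. apply conv_self; auto.
    + apply (NNS_restrict n m a c _ v beta); auto.
  - apply (NNS_ext n m a (fun _ => 0)); [|apply NNS_zero].
    intros i Hi. unfold restrict. rewrite ind_F; [ring|]. intros Hb. apply Hno; eauto.
Qed.

Hypothesis H1 : forall l, (l < K)%nat ->
  aff_indep_cols n m a (fun i => extreme_col n m a blk l i) ->
  forall i1 i2 i3, nonextreme_col n m a blk l i1 -> nonextreme_col n m a blk l i2 ->
    nonextreme_col n m a blk l i3 -> i1 = i2 \/ i1 = i3 \/ i2 = i3.
Hypothesis H2 : forall l, (l < K)%nat ->
  ~ aff_indep_cols n m a (fun i => extreme_col n m a blk l i) ->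
  forall i1 i2, nonextreme_col n m a blk l i1 -> nonextreme_col n m a blk l i2 -> i1 = i2.

(* Negative coefficients of a block sit on non-extreme columns, so there are at most two. *)
Lemma block_SAGE c l : (l < K)%nat -> C_NNS n m a c ->
  (forall i, (i < m)%nat -> blk i <> l -> c i = 0) -> C_SAGE n m a c.
Proof.
  intros Hl HN Hout. set (E := fun i => extreme_col n m a blk l i).
  assert (Hneg : forall i, (i < m)%nat -> c i < 0 -> nonextreme_col n m a blk l i).
  { intros i Hi Hc. destruct (Nat.eq_dec (blk i) l) as [e|ne]; [|rewrite Hout in Hc; auto; lra].
    split; auto. split; auto. intros Hx.
    pose proof (extreme_coef_nonneg n m a blk l Hdist c i Hi (conj e Hx) HN Hout). lra. }
  destruct (classic (exists i1 i2, (i1 < m)%nat /\ (i2 < m)%nat /\ i1 <> i2 /\ c i1 < 0 /\ c i2 < 0))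
    as [[i1 [i2 [Hi1 [Hi2 [Hne [Hn1 Hn2]]]]]]|Hone].
  2: { apply SAGE_at_most_one_negative; auto. intros i i' Hi Hi' Hc Hc'.
       apply NNPP. intros Hne. apply Hone. exists i, i'; auto. }
  pose proof (Hneg i1 Hi1 Hn1) as N1. pose proof (Hneg i2 Hi2 Hn2) as N2.
  assert (HA : aff_indep_cols n m a E).
  { apply NNPP. intros HNA. apply Hne, (H2 l Hl HNA i1 i2 N1 N2). }
  assert (HE1 : ~ E i1) by (intros [_ Hx]; destruct N1 as [_ [_ Hx']]; tauto).
  assert (HE2 : ~ E i2) by (intros [_ Hx]; destruct N2 as [_ [_ Hx']]; tauto).
  assert (HBk : forall i, (i < m)%nat -> blk i = l -> ~ E i -> i = i1 \/ i = i2).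
  { intros i Hi Hb HEi.
    assert (Ni : nonextreme_col n m a blk l i)
      by (split; auto; split; auto; intros Hx; apply HEi; split; auto).
    destruct (H1 l Hl HA i i1 i2 Ni N1 N2) as [|[|]]; auto. lia. }
  destruct (two_nonextreme_barycentric n m a blk l E i1 i2) as [lam [mu [Bl Bm]]]; auto.
  apply (two_negative_SAGE n m a E i1 i2 lam mu c); auto.
  - intros i Hi HEi. apply (extreme_coef_nonneg n m a blk l Hdist); auto.
  - intros i Hi HEi Hn1' Hn2'. destruct (Nat.eq_dec (blk i) l) as [e|ne]; [|apply Hout; auto].
    destruct (HBk i Hi e HEi); lia.
Qed.

End Decomposition.

Theorem mainTheorem10 (n m : nat) (a : nat -> nat -> R)
  (Hdist : forall i i', (i < m)%nat -> (i' < m)%nat -> i <> i' -> ~ eqv n (a i) (a i'))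
  (K : nat) (blk : nat -> nat)
  (Hblk : forall i, (i < m)%nat -> (blk i < K)%nat)
  (Hface : forall l, (l < K)%nat -> is_face n (New_blk n m a blk l) (New n m a))
  (Hdisj : forall l l' p, (l < K)%nat -> (l' < K)%nat -> l <> l' ->
             New_blk n m a blk l p -> New_blk n m a blk l' p -> False)
  (H1 : forall l, (l < K)%nat ->
          aff_indep_cols n m a (fun i => extreme_col n m a blk l i) ->
          forall i1 i2 i3, nonextreme_col n m a blk l i1 -> nonextreme_col n m a blk l i2 ->
            nonextreme_col n m a blk l i3 -> i1 = i2 \/ i1 = i3 \/ i2 = i3)
  (H2 : forall l, (l < K)%nat ->
          ~ aff_indep_cols n m a (fun i => extreme_col n m a blk l i) ->
          forall i1 i2, nonextreme_col n m a blk l i1 -> nonextreme_col n m a blk l i2 ->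
            i1 = i2) :
  forall c : nat -> R, C_SAGE n m a c <-> C_NNS n m a c.
Proof.
  intros c. split; [apply SAGE_NNS|intros HN].
  apply (SAGE_ext n m a (fun i => fsum K (fun l => restrict (fun i => blk i = l) c i))).
  { intros i Hi. unfold restrict. rewrite (fsum_single K _ (blk i) (Hblk i Hi)).
    - rewrite ind_T; auto; ring.
    - intros l _ Hne. rewrite ind_F; auto; ring. }
  apply SAGE_fsum. intros l Hl. apply (block_SAGE n m a K blk Hdist H1 H2 _ l Hl).
  - apply (block_NNS n m a K blk Hblk Hface Hdisj c l Hl HN).
  - intros i Hi Hne. unfold restrict. rewrite ind_F; auto; ring.
Qed.
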